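(* Let $A,B:(0,\infty)\to(0,\infty)$ be the functions $A=\tfrac r3\sqrt{1-r^{-3}}$, $B=\tfrac r{\sqrt3}$, where $r=r(t)\in(1,\infty)$ is determined by $\dot A=\tfrac12(1-A^2/B^2)$, $\dot B=A/B$ with $r\to1$ as $t\to0$. Consider the ODE system $$\dot f_+=\frac{f_+}{A}\Bigl(1-\frac{A^2}{B^2}-f_+\Bigr)+f_-^2\frac{A}{B^2},\qquad \dot f_-=\frac{2f_-}{A}(f_+-1).$$ If a solution $(f_+,f_-)$ lies in $\mathcal{R}_0=\{\tfrac23<f_+<1,\ 0<f_-<1\}$ at some time $t_0>0$, then it exists for all $t\ge t_0$ and converges to $(\tfrac23,0)$, with $$f_+=\tfrac23+\mu t^{-2}+O(t^{-3}),\qquad f_-=\nu t^{-2}+O(t^{-3})\qquad (t\to\infty)$$ for some non-zero real numbers $\mu,\nu$.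
   Context: $A$ and $B$ are the metric coefficients of the Bryant–Salamon $G_2$-metric on $\mathbf{S}(S^3)$; the system is the $\mathrm{SU}(2)^3$-invariant $G_2$-instanton equation for $\mathrm{SU}(2)$-connections $f_+\sum_iE_i\otimes e_i^++f_-\sum_iE_i\otimes e_i^-$, and $(\tfrac23,0)$ corresponds to the nearly-Kähler instanton $A^{nK}$. *)

From Stdlib Require Import Reals Lra.
From Coquelicot Require Import Coquelicot.
Open Scope R_scope.

Definition A_of (r : R -> R) (t : R) : R := r t / 3 * sqrt (1 - / (r t ^ 3)).
Definition B_of (r : R -> R) (t : R) : R := r t / sqrt 3.

Definition solves_at (r : R -> R) (fp fm : R -> R) (t : R) : Prop :=
  is_derive fp t
    (fp t / A_of r t * (1 - A_of r t ^ 2 / B_of r t ^ 2 - fp t)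
     + fm t ^ 2 * (A_of r t / B_of r t ^ 2)) /\
  is_derive fm t (2 * fm t / A_of r t * (fp t - 1)).

Definition has_asymptotics (fp fm : R -> R) : Prop :=
  exists mu nu : R, mu <> 0 /\ nu <> 0 /\
  exists C T : R, 0 < T /\ forall t, T <= t ->
    Rabs (fp t - 2/3 - mu / t ^ 2) <= C / t ^ 3 /\
    Rabs (fm t - nu / t ^ 2) <= C / t ^ 3.

From Stdlib Require Import Reals Lra Lia Classical.
From Coquelicot Require Import Coquelicot.
Open Scope R_scope.

(* Writing [A = r rho / 3] and [B^2 = r^2 / 3] with [rho = sqrt (1 - r^-3)], the equation
   [B' = A / B] says [r' = rho], and the system becomes
     [f+' = (f+ (3 - rho^2 - 3 f+) + f-^2 rho^2) / (r rho)],  [f-' = 6 f- (f+ - 1) / (r rho)].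
   For a level [P < 1] close enough to [1], no solution can leave the box
   [0 < f- <= q, 2/3 < f+ < P] through any of its faces, so the box is forward invariant.  A global
   solution comes from Picard iteration for the system truncated outside the box, which agrees
   with the original one inside it.
   In the box [f-] decays like [r^-beta], hence [u = f+ - 2/3] like [r^(-2 beta)]; bootstrapping
   shows that [G = r^2 u] and [H = r^2 f-] are bounded with derivatives [O(r^-2)].  As [r' = rho]
   is bounded below, they converge at rate [O(1/r)] to limits [mu], [nu], which are positive
   because [G] is eventually increasing and [H exp (- c / r)] is increasing.  Finally [r - t] is
   bounded, which turns [mu r^-2 + O(r^-3)] into [mu t^-2 + O(t^-3)]. *)

(** * Calculus on the real line *)

Ltac rewrite_Derive H :=
  match type of H with is_derive ?f ?x ?l =>
    replace (Derive (fun y => f y) x) with l by (symmetry; exact (is_derive_unique _ _ _ H))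
  end.

Ltac ex_derive_from_hyps := repeat split; try exact I; try (eexists; eassumption).

Lemma is_derive_continuous (h : R -> R) x l : is_derive h x l -> continuous h x.
Proof. intro H. apply (ex_derive_continuous (V := R_NormedModule)). now exists l. Qed.

Lemma le_of_derive_nonneg (h dh : R -> R) a b : a <= b ->
  (forall x, a <= x <= b -> is_derive h x (dh x)) ->
  (forall x, a <= x <= b -> 0 <= dh x) -> h a <= h b.
Proof.
  intros Hab Hd Hpos.
  destruct (MVT_gen h a b dh) as [c [Hc Heq]];
    rewrite ?Rmin_left, ?Rmax_right in * by lra.
  - intros x Hx. apply Hd. lra.
  - intros x Hx. apply continuity_pt_filterlim, (is_derive_continuous _ _ (dh x)), Hd, Hx.
  - assert (0 <= dh c) by (apply Hpos; lra). nra.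
Qed.

Lemma le_of_derive_nonpos (h dh : R -> R) a b : a <= b ->
  (forall x, a <= x <= b -> is_derive h x (dh x)) ->
  (forall x, a <= x <= b -> dh x <= 0) -> h b <= h a.
Proof.
  intros Hab Hd Hneg.
  enough (- h a <= - h b) by lra.
  apply (le_of_derive_nonneg (fun x => - h x) (fun x => - dh x)); auto.
  - intros x Hx. exact (is_derive_opp h x (dh x) (Hd x Hx)).
  - intros x Hx. specialize (Hneg x Hx). lra.
Qed.

Lemma locally_Rabs (P : R -> Prop) t : locally t P ->
  exists d, 0 < d /\ forall s, Rabs (s - t) < d -> P s.
Proof. intros [d Hd]. exists d. split; [apply cond_pos | exact Hd]. Qed.

Lemma locally_pos_of_continuous (g : R -> R) t : continuous g t -> 0 < g t ->
  locally t (fun s => 0 < g s).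
Proof. intros Hc Hp. apply (Hc (fun y => 0 < y)), open_gt, Hp. Qed.

Lemma continuous_ge_left (w : R -> R) m t0 t : t0 < t -> continuous w t ->
  (forall s, t0 <= s < t -> m <= w s) -> m <= w t.
Proof.
  intros Ht Hc Hm. apply Rnot_lt_le. intro Hlt.
  destruct (locally_Rabs _ _ (locally_pos_of_continuous (fun x => m - w x) t
    (continuous_minus (fun _ => m) w t (continuous_const m t) Hc) ltac:(lra))) as [d [Hd Hnear]].
  set (s := Rmax t0 (t - d / 2)).
  assert (Hs : t0 <= s < t) by (split; [apply Rmax_l | apply Rmax_lub_lt; lra]).
  assert (Rabs (s - t) < d).
  { rewrite Rabs_left by lra. pose proof (Rmax_r t0 (t - d / 2)). unfold s in *. lra. }
  specialize (Hnear s H). specialize (Hm s Hs). simpl in Hnear. lra.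
Qed.

Lemma real_induction (Q : R -> Prop) a :
  (forall t, a <= t -> (forall s, a <= s < t -> Q s) -> Q t) ->
  (forall t, a <= t -> Q t -> locally t Q) ->
  forall t, a <= t -> Q t.
Proof.
  intros Hclosed Hopen b Hb. apply NNPP. intro Hnb.
  set (E := fun x => a <= x <= b /\ forall s, a <= s < x -> Q s).
  destruct (completeness E) as [m [Hub Hlub]].
  - exists b. now intros x [Hx _].
  - exists a. split; [lra | intros; lra].
  - assert (Ham : a <= m) by (apply Hub; split; [lra | intros; lra]).
    assert (Hmb : m <= b) by (apply Hlub; now intros x [Hx _]).
    assert (Hbelow : forall s, a <= s < m -> Q s).
    { intros s Hs. apply NNPP. intro Hns.
      enough (m <= s) by lra.
      apply Hlub. intros x [Hx Hq]. apply Rnot_lt_le. intro Hsx. now apply Hns, Hq. }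
    assert (Qm : Q m) by now apply Hclosed.
    destruct (Req_dec m b) as [-> | Hne]; [contradiction |].
    destruct (locally_Rabs _ _ (Hopen m Ham Qm)) as [d [Hd Hq]].
    set (x := Rmin b (m + d / 2)).
    assert (Hx : x <= m + d / 2) by apply Rmin_r.
    assert (E x).
    { split; [split; [apply Rmin_glb; lra | apply Rmin_l] |].
      intros s Hs. destruct (Rlt_le_dec s m); [apply Hbelow; lra | apply Hq].
      rewrite Rabs_right; lra. }
    assert (x <= m) by now apply Hub.
    assert (m < x) by (apply Rmin_glb_lt; lra).
    lra.
Qed.

(* Gronwall: [w e^{K s}] is nondecreasing, so [w] stays above [w t0 e^{-K (t - t0)}]. *)
Lemma pos_of_derive_ge_linear (w dw : R -> R) K t0 t : 0 <= K -> t0 <= t ->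
  0 < w t0 -> continuous w t ->
  (forall s, t0 <= s < t -> is_derive w s (dw s) /\ - K * w s <= dw s) ->
  0 < w t.
Proof.
  intros HK Ht Hw0 Hc Hd.
  destruct (Req_dec t0 t) as [<- | Hne]; auto.
  set (m := w t0 * exp (- K * (t - t0))).
  assert (Hm : 0 < m) by (apply Rmult_lt_0_compat; auto using exp_pos).
  enough (m <= w t) by lra.
  apply (continuous_ge_left w m t0 t); [lra | auto |].
  intros s Hs.
  assert (Hmono : w t0 * exp (K * t0) <= w s * exp (K * s)).
  { apply (le_of_derive_nonneg (fun x => w x * exp (K * x))
      (fun x => (dw x + K * w x) * exp (K * x))); [lra | |].
    - intros x Hx. destruct (Hd x ltac:(lra)) as [Hdx _].
      auto_derive; [now exists (dw x) |]. rewrite_Derive Hdx. ring.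
    - intros x Hx. destruct (Hd x ltac:(lra)) as [_ Hb].
      apply Rmult_le_pos; [lra | apply Rlt_le, exp_pos]. }
  assert (Hexp : exp (- K * (t - t0)) <= exp (- K * (s - t0))).
  { destruct (Req_dec K 0) as [-> | HK0]; [right; f_equal; ring |].
    apply Rlt_le, exp_increasing. nra. }
  assert (Hsplit : forall x, exp (K * x) * exp (- K * x) = 1).
  { intro x. rewrite <- exp_plus, <- exp_0. f_equal. ring. }
  assert (Hws : w t0 * exp (- K * (s - t0)) <= w s).
  { replace (w t0 * exp (- K * (s - t0))) with (w t0 * exp (K * t0) * exp (- K * s))
      by (rewrite Rmult_assoc, <- exp_plus; f_equal; f_equal; ring).
    replace (w s) with (w s * exp (K * s) * exp (- K * s))
      by (rewrite Rmult_assoc, Hsplit; ring).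
    apply Rmult_le_compat_r; [apply Rlt_le, exp_pos | exact Hmono]. }
  unfold m. apply Rmult_le_compat_l with (r := w t0) in Hexp; lra.
Qed.

Lemma is_derive_sub_const (f : R -> R) c x l : is_derive f x l -> is_derive (fun y => f y - c) x l.
Proof. intro H. auto_derive; [now exists l |]. rewrite_Derive H. ring. Qed.

Lemma is_derive_const_sub (f : R -> R) c x l : is_derive f x l -> is_derive (fun y => c - f y) x (- l).
Proof. intro H. auto_derive; [now exists l |]. rewrite_Derive H. ring. Qed.

Lemma lipschitz_of_derive_bounded (f df : R -> R) M : (forall x, is_derive f x (df x)) ->
  (forall x, Rabs (df x) <= M) -> forall t s, Rabs (f t - f s) <= M * Rabs (t - s).
Proof.
  intros Hd HM t s.
  destruct (MVT_gen f s t df) as [c [_ Hc]].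
  - intros x _. apply Hd.
  - intros x _. apply continuity_pt_filterlim, (is_derive_continuous _ _ (df x)), Hd.
  - rewrite Hc, Rabs_mult. apply Rmult_le_compat_r; [apply Rabs_pos | apply HM].
Qed.

Lemma lipschitz_continuous (f : R -> R) M : 0 <= M ->
  (forall t s, Rabs (f t - f s) <= M * Rabs (t - s)) -> forall t, continuous f t.
Proof.
  intros HM Hl t. apply (proj2 (filterlim_locally f (f t))). intro eps.
  assert (Hd : 0 < eps / (M + 1)) by (apply Rdiv_lt_0_compat; [apply cond_pos | lra]).
  exists (mkposreal _ Hd). intros y Hy.
  unfold ball in *; simpl in *; unfold AbsRing_ball, abs, minus, plus, opp in *; simpl in *.
  assert (M * Rabs (y + - t) <= M * (eps / (M + 1))) by (apply Rmult_le_compat_l; lra).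
  assert (M * (eps / (M + 1)) < eps).
  { pose proof (cond_pos eps). apply (Rmult_lt_reg_r (M + 1)); [lra |].
    unfold Rdiv. rewrite !Rmult_assoc, Rinv_l by lra. nra. }
  specialize (Hl y t). unfold Rminus in Hl. lra.
Qed.

(* Coquelicot's generic [continuous_plus], [continuous_minus] and [continuous_mult] at type
   [R -> R], in a form that [apply] can unify with. *)
Lemma continuous_Rplus_fun (f g : R -> R) x :
  continuous f x -> continuous g x -> continuous (fun y => f y + g y) x.
Proof. exact (continuous_plus f g x). Qed.

Lemma continuous_Rminus_fun (f g : R -> R) x :
  continuous f x -> continuous g x -> continuous (fun y => f y - g y) x.
Proof. exact (continuous_minus f g x). Qed.

Lemma continuous_Rmult_fun (f g : R -> R) x :
  continuous f x -> continuous g x -> continuous (fun y => f y * g y) x.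
Proof. exact (continuous_mult (K := R_AbsRing) f g x). Qed.

Lemma continuous_Rmax_fun (f g : R -> R) x :
  continuous f x -> continuous g x -> continuous (fun y => Rmax (f y) (g y)) x.
Proof.
  intros Hf Hg. apply (continuous_ext (fun y => (f y + g y + Rabs (f y - g y)) * / 2)).
  - intro y. unfold Rmax. destruct Rle_dec; [rewrite Rabs_left1 | rewrite Rabs_right]; lra.
  - apply continuous_Rmult_fun; [| apply continuous_const].
    apply continuous_Rplus_fun; [apply continuous_Rplus_fun; auto |].
    now apply continuous_Rabs_comp, continuous_Rminus_fun.
Qed.

Lemma continuous_Rmin_fun (f g : R -> R) x :
  continuous f x -> continuous g x -> continuous (fun y => Rmin (f y) (g y)) x.
Proof.
  intros Hf Hg. apply (continuous_ext (fun y => (f y + g y - Rabs (f y - g y)) * / 2)).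
  - intro y. unfold Rmin. destruct Rle_dec; [rewrite Rabs_left1 | rewrite Rabs_right]; lra.
  - apply continuous_Rmult_fun; [| apply continuous_const].
    apply continuous_Rminus_fun; [apply continuous_Rplus_fun; auto |].
    now apply continuous_Rabs_comp, continuous_Rminus_fun.
Qed.

Lemma Rdiv_le_compat_denom N a D0 D : 0 < D0 <= D -> 0 <= a -> N <= a -> N / D <= a / D0.
Proof.
  intros [H0 H1] Ha HN. apply Rle_trans with (a / D).
  - apply Rmult_le_compat_r; [apply Rlt_le, Rinv_0_lt_compat; lra | exact HN].
  - apply Rmult_le_compat_l; [exact Ha | apply Rinv_le_contravar; lra].
Qed.

Lemma Rdiv_ge_compat_denom N a D0 D : 0 < D0 <= D -> 0 <= a -> - a <= N -> - a / D0 <= N / D.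
Proof.
  intros HD Ha HN. assert (- N / D <= a / D0) by (apply Rdiv_le_compat_denom; auto; lra).
  unfold Rdiv in *. lra.
Qed.

Lemma Rle_mult_ratio c a b : 0 <= c -> 0 < a <= b -> c <= c * (b / a).
Proof.
  intros Hc [Ha Hab]. rewrite <- (Rmult_1_r c) at 1. apply Rmult_le_compat_l; [exact Hc |].
  apply (Rmult_le_reg_r a); [exact Ha |]. unfold Rdiv. rewrite Rmult_assoc, Rinv_l; lra.
Qed.

Lemma Rpower_2_minus x a : 0 < x -> Rpower x (2 - a) = x ^ 2 * Rpower x (- a).
Proof.
  intro Hx. unfold Rminus. rewrite Rpower_plus. f_equal.
  replace 2 with (INR 2) by (simpl; ring). now rewrite Rpower_pow.
Qed.

Lemma Rpower_le_inv_pow x a (n : nat) : 1 <= x -> - INR n <= a -> / x ^ n <= Rpower x a.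
Proof.
  intros Hx Ha. rewrite <- Rpower_pow, <- Rpower_Ropp by lra. now apply Rle_Rpower.
Qed.

Lemma exists_limit_of_monotone_bounds (g phi : R -> R) T :
  (forall t, T <= t -> 0 <= phi t) ->
  (forall t s, T <= t <= s -> g s + phi s <= g t + phi t) ->
  (forall t s, T <= t <= s -> g t - phi t <= g s - phi s) ->
  exists L, forall t, T <= t -> Rabs (g t - L) <= phi t.
Proof.
  intros Hphi Hdec Hinc.
  set (E := fun x => exists t, T <= t /\ x = g t - phi t).
  destruct (completeness E) as [L [Hub Hlub]].
  - exists (g T + phi T). intros x [t [Ht ->]].
    specialize (Hdec T t ltac:(lra)). specialize (Hphi t Ht). lra.
  - exists (g T - phi T), T. split; [lra | reflexivity].
  - exists L. intros t Ht. apply Rabs_le. split.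
    + enough (L <= g t + phi t) by lra.
      apply Hlub. intros x [s [Hs ->]]. destruct (Rle_dec t s).
      * specialize (Hdec t s ltac:(lra)). specialize (Hphi s Hs). lra.
      * specialize (Hinc s t ltac:(lra)). specialize (Hphi t Ht). lra.
    + enough (g t - phi t <= L) by lra. apply Hub. now exists t.
Qed.

Lemma filterlim_of_abs_le_inv (f : R -> R) l K T : 0 < T -> 0 <= K ->
  (forall x, T <= x -> Rabs (f x - l) <= K / x) -> filterlim f (Rbar_locally p_infty) (locally l).
Proof.
  intros HT HK Hb. apply (proj2 (filterlim_locally f l)). intro eps.
  pose proof (cond_pos eps).
  exists (Rmax T (K / eps)). intros x Hx.
  assert (T <= x) by (pose proof (Rmax_l T (K / eps)); lra).
  assert (K / eps < x) by (pose proof (Rmax_r T (K / eps)); lra).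
  assert (K / x < eps).
  { apply (Rmult_lt_reg_r x); [lra |]. unfold Rdiv. rewrite Rmult_assoc, Rinv_l by lra.
    apply (Rmult_lt_reg_r (/ eps)); [apply Rinv_0_lt_compat; lra |].
    replace (eps * x * / eps) with x by (field; lra). rewrite Rmult_1_r. assumption. }
  specialize (Hb x H0). unfold ball; simpl; unfold AbsRing_ball, abs, minus, plus, opp; simpl.
  unfold Rminus in Hb. lra.
Qed.

Lemma filterlim_of_inv_sq_expansion (f : R -> R) l m C T : 0 <= C ->
  (forall t, T <= t -> Rabs (f t - l - m / t ^ 2) <= C / t ^ 3) ->
  filterlim f (Rbar_locally p_infty) (locally l).
Proof.
  intros HC Hf. apply (filterlim_of_abs_le_inv f l (Rabs m + C) (Rmax T 1)).
  - pose proof (Rmax_r T 1). lra.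
  - pose proof (Rabs_pos m). lra.
  - intros x Hx. pose proof (Rmax_l T 1). pose proof (Rmax_r T 1).
    specialize (Hf x ltac:(lra)).
    assert (Rabs (m / x ^ 2) <= Rabs m / x).
    { unfold Rdiv. rewrite Rabs_mult, (Rabs_right (/ x ^ 2))
        by (apply Rle_ge, Rlt_le, Rinv_0_lt_compat, pow_lt; lra).
      apply Rmult_le_compat_l; [apply Rabs_pos |]. apply Rinv_le_contravar; [lra | simpl; nra]. }
    assert (C / x ^ 3 <= C / x).
    { unfold Rdiv. apply Rmult_le_compat_l; [exact HC |]. apply Rinv_le_contravar; [lra | simpl; nra]. }
    replace (f x - l) with ((f x - l - m / x ^ 2) + m / x ^ 2) by ring.
    eapply Rle_trans; [apply Rabs_triang |]. unfold Rdiv in *. lra.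
Qed.

(* Change of variable from [a] to [t] in [g = mu a^-2 + O(a^-3)], for [a - t] bounded:
   [a^-2 - t^-2 = (t - a) (t + a) / (a^2 t^2)]. *)
Lemma inv_sq_expansion_shift g mu c D t a : 0 < t -> t <= 2 * a -> Rabs (a - t) <= D -> 0 <= c ->
  Rabs (a ^ 2 * g - mu) <= c / a -> Rabs (g - mu / t ^ 2) <= (8 * c + 6 * Rabs mu * D) / t ^ 3.
Proof.
  intros Ht Hta HD Hc Hg.
  assert (Ha : 0 < a) by lra.
  assert (HD0 : 0 <= D) by (pose proof (Rabs_pos (a - t)); lra).
  replace (g - mu / t ^ 2) with ((a ^ 2 * g - mu) / a ^ 2 + mu * ((t - a) * (t + a)) / (a ^ 2 * t ^ 2))
    by (field; lra).
  eapply Rle_trans; [apply Rabs_triang |].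
  assert (B1 : Rabs ((a ^ 2 * g - mu) / a ^ 2) <= 8 * c / t ^ 3).
  { unfold Rdiv. rewrite Rabs_mult, (Rabs_right (/ a ^ 2))
      by (apply Rle_ge, Rlt_le, Rinv_0_lt_compat, pow_lt; lra).
    apply Rle_trans with (c / a * / a ^ 2).
    - apply Rmult_le_compat_r; [apply Rlt_le, Rinv_0_lt_compat, pow_lt; lra | exact Hg].
    - replace (c / a * / a ^ 2) with (c * / a ^ 3) by (field; lra).
      replace (8 * c * / t ^ 3) with (c * / (t ^ 3 / 8)) by (field; lra).
      apply Rmult_le_compat_l; [exact Hc |].
      apply Rinv_le_contravar; [apply Rdiv_lt_0_compat; [apply pow_lt | ]; lra |].
      assert (t ^ 3 <= (2 * a) ^ 3) by (apply pow_incr; lra). simpl in *. lra. }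
  assert (B2 : Rabs (mu * ((t - a) * (t + a)) / (a ^ 2 * t ^ 2)) <= 6 * Rabs mu * D / t ^ 3).
  { unfold Rdiv. rewrite !Rabs_mult, (Rabs_right (t + a)) by lra.
    rewrite (Rabs_right (/ (a ^ 2 * t ^ 2)))
      by (apply Rle_ge, Rlt_le, Rinv_0_lt_compat, Rmult_lt_0_compat; apply pow_lt; lra).
    rewrite (Rabs_minus_sym t a).
    apply Rle_trans with (Rabs mu * (D * (3 * a)) * / (a ^ 2 * t ^ 2)).
    - apply Rmult_le_compat_r; [apply Rlt_le, Rinv_0_lt_compat; apply Rmult_lt_0_compat; apply pow_lt; lra |].
      apply Rmult_le_compat_l; [apply Rabs_pos |].
      apply Rmult_le_compat; [apply Rabs_pos | lra | exact HD | lra].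
    - replace (Rabs mu * (D * (3 * a)) * / (a ^ 2 * t ^ 2)) with (3 * Rabs mu * D * / t ^ 2 * / a)
        by (field; lra).
      replace (6 * Rabs mu * D * / t ^ 3) with (3 * Rabs mu * D * / t ^ 2 * (2 / t)) by (field; lra).
      apply Rmult_le_compat_l.
      + apply Rmult_le_pos; [pose proof (Rabs_pos mu); nra | apply Rlt_le, Rinv_0_lt_compat, pow_lt; lra].
      + apply (Rmult_le_reg_r (a * t)); [nra |].
        replace (/ a * (a * t)) with t by (field; lra).
        replace (2 / t * (a * t)) with (2 * a) by (field; lra). lra. }
  unfold Rdiv in *. lra.
Qed.

(** * Global solutions of bounded Lipschitz systems *)

Lemma abs_le_exp_of_derive_forward (h dh : R -> R) t0 c K : 0 <= c -> h t0 = 0 ->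
  (forall x, t0 <= x -> is_derive h x (dh x)) ->
  (forall x, t0 <= x -> Rabs (dh x) <= c * K * exp (K * (x - t0))) ->
  forall t, t0 <= t -> Rabs (h t) <= c * exp (K * (t - t0)).
Proof.
  intros Hc H0 Hd Hb t Ht.
  assert (Hup : c * exp (K * (t0 - t0)) - h t0 <= c * exp (K * (t - t0)) - h t).
  { apply (le_of_derive_nonneg (fun x => c * exp (K * (x - t0)) - h x)
      (fun x => c * K * exp (K * (x - t0)) - dh x)); [lra | |].
    - intros x Hx. specialize (Hd x ltac:(lra)).
      auto_derive; [now exists (dh x) |]. rewrite_Derive Hd. unfold Rminus. ring.
    - intros x Hx. specialize (Hb x ltac:(lra)). apply Rabs_le_between in Hb. lra. }
  assert (Hlow : c * exp (K * (t0 - t0)) + h t0 <= c * exp (K * (t - t0)) + h t).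
  { apply (le_of_derive_nonneg (fun x => c * exp (K * (x - t0)) + h x)
      (fun x => c * K * exp (K * (x - t0)) + dh x)); [lra | |].
    - intros x Hx. specialize (Hd x ltac:(lra)).
      auto_derive; [now exists (dh x) |]. rewrite_Derive Hd. unfold Rminus. ring.
    - intros x Hx. specialize (Hb x ltac:(lra)). apply Rabs_le_between in Hb. lra. }
  replace (t0 - t0) with 0 in Hup, Hlow by ring.
  rewrite Rmult_0_r, exp_0, H0 in Hup, Hlow. apply Rabs_le. lra.
Qed.

(* The backward direction follows from the forward one applied to [x |-> h (2 t0 - x)]. *)
Lemma abs_le_exp_of_derive (h dh : R -> R) t0 c K : 0 <= c -> h t0 = 0 ->
  (forall x, is_derive h x (dh x)) ->
  (forall x, Rabs (dh x) <= c * K * exp (K * Rabs (x - t0))) ->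
  forall t, Rabs (h t) <= c * exp (K * Rabs (t - t0)).
Proof.
  intros Hc H0 Hd Hb t.
  destruct (Rle_dec t0 t) as [Ht | Ht].
  - rewrite (Rabs_right (t - t0)) by lra.
    apply (abs_le_exp_of_derive_forward h dh); auto.
    intros x Hx. rewrite <- (Rabs_right (x - t0)) by lra. apply Hb.
  - replace (Rabs (t - t0)) with ((2 * t0 - t) - t0) by (rewrite Rabs_left; lra).
    replace (h t) with (h (2 * t0 - (2 * t0 - t))) by (f_equal; ring).
    apply (abs_le_exp_of_derive_forward (fun x => h (2 * t0 - x)) (fun x => - dh (2 * t0 - x)));
      [auto | now replace (2 * t0 - t0) with t0 by ring | | | lra].
    + intros x _. auto_derive; [now exists (dh (2 * t0 - x)) |].
      rewrite_Derive (Hd (2 * t0 + - x)). unfold Rminus. ring.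
    + intros x Hx. rewrite Rabs_Ropp.
      replace (x - t0) with (Rabs (2 * t0 - x - t0)) by (rewrite Rabs_left1; lra).
      apply Hb.
Qed.

Lemma is_lim_seq_abs_le (w : nat -> R) (l c : R) : is_lim_seq w l ->
  (forall n, Rabs (w n) <= c) -> Rabs l <= c.
Proof.
  intros Hw Hc.
  exact (is_lim_seq_le _ _ (Rabs l) c Hc (is_lim_seq_abs w l Hw) (is_lim_seq_const c)).
Qed.

Lemma eq0_of_abs_le_geom a B : (forall n, Rabs a <= B * (/ 2) ^ n) -> a = 0.
Proof.
  intro H.
  assert (Hlim : is_lim_seq (fun n => B * (/ 2) ^ n) 0).
  { replace (Finite 0) with (Rbar_mult B 0) by (simpl; f_equal; ring).
    apply is_lim_seq_scal_l, is_lim_seq_geom. rewrite Rabs_right; lra. }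
  pose proof (is_lim_seq_le _ _ (Rabs a) 0 H (is_lim_seq_const _) Hlim) as Hle. simpl in Hle.
  pose proof (Rabs_pos a). apply Rabs_eq_0. lra.
Qed.

Lemma geometric_tail (u : nat -> R) B : (forall n, Rabs (u (S n) - u n) <= B * (/ 2) ^ n) ->
  forall n k, Rabs (u (k + n)%nat - u n) <= 2 * B * ((/ 2) ^ n - (/ 2) ^ (k + n)).
Proof.
  intros Hu n k. induction k as [| k IH].
  - simpl. rewrite !Rminus_diag, Rabs_R0. lra.
  - replace (u (S k + n)%nat - u n) with ((u (S (k + n)) - u (k + n)%nat) + (u (k + n)%nat - u n))
      by (simpl; ring).
    eapply Rle_trans; [apply Rabs_triang |].
    specialize (Hu (k + n)%nat).
    replace ((/ 2) ^ (S k + n)) with (/ 2 * (/ 2) ^ (k + n)) by reflexivity.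
    lra.
Qed.

Lemma geometric_cauchy_lim (u : nat -> R) B : (forall n, Rabs (u (S n) - u n) <= B * (/ 2) ^ n) ->
  is_lim_seq u (real (Lim_seq u)) /\ forall n, Rabs (real (Lim_seq u) - u n) <= 2 * B * (/ 2) ^ n.
Proof.
  intro Hu.
  assert (Hpow : forall n, 0 < (/ 2) ^ n) by (intro; apply pow_lt; lra).
  assert (Htail : forall n m, (n <= m)%nat -> Rabs (u m - u n) <= 2 * B * (/ 2) ^ n).
  { intros n m Hnm. replace m with (m - n + n)%nat by lia.
    eapply Rle_trans; [apply geometric_tail, Hu |]. pose proof (Hpow (m - n + n)%nat).
    pose proof (Rabs_pos (u (S n) - u n)). specialize (Hu n). specialize (Hpow n). nra. }
  assert (Hcv : ex_finite_lim_seq u).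
  { apply ex_lim_seq_cauchy_corr. intro eps.
    assert (HB : 0 <= B) by (specialize (Hu O); pose proof (Rabs_pos (u 1%nat - u O)); simpl in Hu; lra).
    destruct (pow_lt_1_zero (/ 2) ltac:(rewrite Rabs_right; lra) (eps / (4 * B + 1)))
      as [N HN]; [apply Rdiv_lt_0_compat; [apply cond_pos | lra] |].
    exists N. intros n m Hn Hm.
    specialize (HN N (le_n N)). rewrite Rabs_right in HN by (apply Rle_ge, Rlt_le, Hpow).
    assert (HBN : 4 * B * (/ 2) ^ N < eps).
    { apply Rle_lt_trans with ((4 * B + 1) * (/ 2) ^ N); [pose proof (Hpow N); nra |].
      apply (Rmult_lt_compat_l (4 * B + 1)) in HN; [| lra].
      unfold Rdiv in HN. rewrite <- Rmult_assoc, Rinv_r_simpl_m in HN; lra. }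
    pose proof (Htail N n Hn). pose proof (Htail N m Hm).
    replace (u n - u m) with ((u n - u N) - (u m - u N)) by ring.
    eapply Rle_lt_trans; [apply Rabs_triang |]. rewrite Rabs_Ropp. lra. }
  destruct Hcv as [l Hl]. rewrite (is_lim_seq_unique _ _ Hl). split; [exact Hl |]. intro n.
  apply (is_lim_seq_abs_le (fun k => u (k + n)%nat - u n)).
  - apply (is_lim_seq_minus' _ _ l (u n)); [| apply is_lim_seq_const].
    now apply (is_lim_seq_incr_n u n l).
  - intro k. apply Htail. lia.
Qed.

Section PicardMap.

Variables (F : R -> R -> R -> R) (t0 c L M : R).
Hypothesis L_ge0 : 0 <= L.
Hypothesis F_bounded : forall s x y, Rabs (F s x y) <= M.
Hypothesis F_lipschitz : forall s x y x' y',
  Rabs (F s x y - F s x' y') <= L * (Rabs (x - x') + Rabs (y - y')).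
Hypothesis F_continuous : forall f g : R -> R,
  (forall s, continuous f s) -> (forall s, continuous g s) ->
  forall s, continuous (fun s => F s (f s) (g s)) s.

Definition picard_map (f g : R -> R) (t : R) : R := c + RInt (fun s => F s (f s) (g s)) t0 t.

Lemma is_derive_picard_map f g : (forall s, continuous f s) -> (forall s, continuous g s) ->
  forall t, is_derive (picard_map f g) t (F t (f t) (g t)).
Proof.
  intros Hf Hg t.
  assert (Hh : forall s, continuous (fun s => F s (f s) (g s)) s) by now apply F_continuous.
  unfold picard_map. auto_derive; [| ring].
  split; [| split; [| exact I]].
  - apply (ex_RInt_continuous (V := R_CompleteNormedModule)). intros; apply Hh.
  - exists (mkposreal 1 Rlt_0_1). intros; apply continuity_pt_filterlim, Hh.
Qed.

Lemma picard_map_start f g : picard_map f g t0 = c.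
Proof. unfold picard_map. rewrite RInt_point. simpl. unfold zero. simpl. ring. Qed.

Lemma picard_map_lipschitz f g : (forall s, continuous f s) -> (forall s, continuous g s) ->
  forall t s, Rabs (picard_map f g t - picard_map f g s) <= M * Rabs (t - s).
Proof.
  intros Hf Hg.
  apply (lipschitz_of_derive_bounded _ (fun x => F x (f x) (g x))); [| intro; apply F_bounded].
  now apply is_derive_picard_map.
Qed.

(* Contraction for the weighted norm [sup |h t| exp (- K |t - t0|)]. *)
Lemma picard_map_contraction f g f' g' K B :
  (forall s, continuous f s) -> (forall s, continuous g s) ->
  (forall s, continuous f' s) -> (forall s, continuous g' s) -> 0 < K -> 0 <= B ->
  (forall x, Rabs (f x - f' x) + Rabs (g x - g' x) <= B * exp (K * Rabs (x - t0))) ->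
  forall t, Rabs (picard_map f g t - picard_map f' g' t) <= L * B / K * exp (K * Rabs (t - t0)).
Proof.
  intros Hf Hg Hf' Hg' HK HB Hfg.
  apply (abs_le_exp_of_derive _ (fun x => F x (f x) (g x) - F x (f' x) (g' x))).
  - apply Rmult_le_pos; [nra | apply Rlt_le, Rinv_0_lt_compat, HK].
  - rewrite !picard_map_start. ring.
  - intro x. exact (is_derive_minus _ _ x _ _
      (is_derive_picard_map f g Hf Hg x) (is_derive_picard_map f' g' Hf' Hg' x)).
  - intro x. eapply Rle_trans; [apply F_lipschitz |].
    replace (L * B / K * K) with (L * B) by (field; lra).
    rewrite Rmult_assoc. apply Rmult_le_compat_l; auto.
Qed.

End PicardMap.

Section Picard.

Variables (F1 F2 : R -> R -> R -> R) (t0 p q L M : R).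
Hypothesis L_pos : 0 < L.
Hypothesis F1_bounded : forall s x y, Rabs (F1 s x y) <= M.
Hypothesis F2_bounded : forall s x y, Rabs (F2 s x y) <= M.
Hypothesis F1_lipschitz : forall s x y x' y',
  Rabs (F1 s x y - F1 s x' y') <= L * (Rabs (x - x') + Rabs (y - y')).
Hypothesis F2_lipschitz : forall s x y x' y',
  Rabs (F2 s x y - F2 s x' y') <= L * (Rabs (x - x') + Rabs (y - y')).
Hypothesis F1_continuous : forall f g : R -> R,
  (forall s, continuous f s) -> (forall s, continuous g s) ->
  forall s, continuous (fun s => F1 s (f s) (g s)) s.
Hypothesis F2_continuous : forall f g : R -> R,
  (forall s, continuous f s) -> (forall s, continuous g s) ->
  forall s, continuous (fun s => F2 s (f s) (g s)) s.

Fixpoint picard_iterate (n : nat) : (R -> R) * (R -> R) :=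
  match n with
  | O => (fun _ => p, fun _ => q)
  | S n => (picard_map F1 t0 p (fst (picard_iterate n)) (snd (picard_iterate n)),
            picard_map F2 t0 q (fst (picard_iterate n)) (snd (picard_iterate n)))
  end.

Let X (n : nat) : R -> R := fst (picard_iterate n).
Let Y (n : nat) : R -> R := snd (picard_iterate n).
Let K : R := 4 * L.
Let C0 : R := 2 * M / K.
Let E (t : R) : R := exp (K * Rabs (t - t0)).

Let M_ge0 : 0 <= M.
Proof. pose proof (F1_bounded 0 0 0). pose proof (Rabs_pos (F1 0 0 0)). lra. Qed.

Let C0_ge0 : 0 <= C0.
Proof. unfold C0, K. apply Rmult_le_pos; [lra | apply Rlt_le, Rinv_0_lt_compat; lra]. Qed.

Lemma picard_iterate_continuous n : (forall s, continuous (X n) s) /\ (forall s, continuous (Y n) s).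
Proof.
  induction n as [| n [HX HY]]; [split; intro; apply continuous_const |].
  split; intro s; eapply is_derive_continuous, is_derive_picard_map; eauto.
Qed.

Lemma picard_iterate_step n t :
  Rabs (X (S n) t - X n t) + Rabs (Y (S n) t - Y n t) <= C0 * E t * (/ 2) ^ n.
Proof.
  revert t. induction n as [| n IH]; intro t.
  - assert (HKE : M * Rabs (t - t0) <= M / K * E t).
    { unfold E. pose proof (exp_ineq1_le (K * Rabs (t - t0))).
      replace (M * Rabs (t - t0)) with (M / K * (K * Rabs (t - t0))) by (unfold K; field; lra).
      apply Rmult_le_compat_l; [| lra].
      apply Rmult_le_pos; [lra | apply Rlt_le, Rinv_0_lt_compat; unfold K; lra]. }
    destruct (picard_iterate_continuous 0) as [HX HY].
    pose proof (picard_map_lipschitz F1 t0 p M F1_bounded F1_continuous (X 0) (Y 0) HX HY t t0) as H1.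
    pose proof (picard_map_lipschitz F2 t0 q M F2_bounded F2_continuous (X 0) (Y 0) HX HY t t0) as H2.
    change (Rabs (picard_map F1 t0 p (X 0) (Y 0) t - p) + Rabs (picard_map F2 t0 q (X 0) (Y 0) t - q)
      <= C0 * E t * 1).
    rewrite picard_map_start in H1, H2. unfold C0. rewrite Rmult_1_r.
    replace (2 * M / K * E t) with (M / K * E t + M / K * E t) by (unfold Rdiv; ring). lra.
  - destruct (picard_iterate_continuous n) as [HX HY].
    destruct (picard_iterate_continuous (S n)) as [HX' HY'].
    assert (HB : 0 <= C0 * (/ 2) ^ n) by (apply Rmult_le_pos; [exact C0_ge0 | apply pow_le; lra]).
    assert (Hprev : forall x, Rabs (X (S n) x - X n x) + Rabs (Y (S n) x - Y n x)
                              <= C0 * (/ 2) ^ n * exp (K * Rabs (x - t0))).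
    { intro x. replace (C0 * (/ 2) ^ n * exp (K * Rabs (x - t0))) with (C0 * E x * (/ 2) ^ n)
        by (unfold E; ring). apply IH. }
    pose proof (picard_map_contraction F1 t0 p L (Rlt_le _ _ L_pos) F1_lipschitz F1_continuous
      _ _ _ _ K _ HX' HY' HX HY ltac:(unfold K; lra) HB Hprev t) as H1.
    pose proof (picard_map_contraction F2 t0 q L (Rlt_le _ _ L_pos) F2_lipschitz F2_continuous
      _ _ _ _ K _ HX' HY' HX HY ltac:(unfold K; lra) HB Hprev t) as H2.
    change (Rabs (picard_map F1 t0 p (X (S n)) (Y (S n)) t - picard_map F1 t0 p (X n) (Y n) t)
      + Rabs (picard_map F2 t0 q (X (S n)) (Y (S n)) t - picard_map F2 t0 q (X n) (Y n) t)
      <= C0 * E t * (/ 2) ^ S n).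
    replace (L * (C0 * (/ 2) ^ n) / K * exp (K * Rabs (t - t0))) with (C0 * E t * (/ 2) ^ S n / 2)
      in H1, H2 by (unfold E, K; simpl; field; lra).
    lra.
Qed.

Let Xl (t : R) : R := real (Lim_seq (fun n => X n t)).
Let Yl (t : R) : R := real (Lim_seq (fun n => Y n t)).

Lemma picard_limit t : is_lim_seq (fun n => X n t) (Xl t) /\ is_lim_seq (fun n => Y n t) (Yl t) /\
  forall n, Rabs (Xl t - X n t) + Rabs (Yl t - Y n t) <= 4 * C0 * E t * (/ 2) ^ n.
Proof.
  assert (HX : forall n, Rabs (X (S n) t - X n t) <= C0 * E t * (/ 2) ^ n).
  { intro n. pose proof (picard_iterate_step n t). pose proof (Rabs_pos (Y (S n) t - Y n t)). lra. }
  assert (HY : forall n, Rabs (Y (S n) t - Y n t) <= C0 * E t * (/ 2) ^ n).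
  { intro n. pose proof (picard_iterate_step n t). pose proof (Rabs_pos (X (S n) t - X n t)). lra. }
  destruct (geometric_cauchy_lim _ _ HX) as [LX BX].
  destruct (geometric_cauchy_lim _ _ HY) as [LY BY].
  split; [exact LX | split; [exact LY |]].
  intro n. specialize (BX n). specialize (BY n). unfold Xl, Yl. lra.
Qed.

Lemma picard_limit_lipschitz t s :
  Rabs (Xl t - Xl s) <= M * Rabs (t - s) /\ Rabs (Yl t - Yl s) <= M * Rabs (t - s).
Proof.
  destruct (picard_limit t) as [LXt [LYt _]]. destruct (picard_limit s) as [LXs [LYs _]].
  assert (Hn : forall n, Rabs (X n t - X n s) <= M * Rabs (t - s) /\
                         Rabs (Y n t - Y n s) <= M * Rabs (t - s)).
  { intros [| n].
    - change (Rabs (p - p) <= M * Rabs (t - s) /\ Rabs (q - q) <= M * Rabs (t - s)).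
      replace (p - p) with 0 by ring. replace (q - q) with 0 by ring. rewrite Rabs_R0.
      split; apply Rmult_le_pos; auto using Rabs_pos.
    - destruct (picard_iterate_continuous n) as [HX HY]. split.
      + exact (picard_map_lipschitz F1 t0 p M F1_bounded F1_continuous _ _ HX HY t s).
      + exact (picard_map_lipschitz F2 t0 q M F2_bounded F2_continuous _ _ HX HY t s). }
  split.
  - apply (is_lim_seq_abs_le (fun n => X n t - X n s)); [now apply is_lim_seq_minus' |].
    intro n. apply Hn.
  - apply (is_lim_seq_abs_le (fun n => Y n t - Y n s)); [now apply is_lim_seq_minus' |].
    intro n. apply Hn.
Qed.

Lemma picard_limit_continuous : (forall s, continuous Xl s) /\ (forall s, continuous Yl s).
Proof.
  split; apply (lipschitz_continuous _ M M_ge0); intros t s; apply picard_limit_lipschitz.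
Qed.

(* Both sides are within [O (2^-n)] of the [n]-th iterate in the weighted norm. *)
Lemma picard_limit_fixed t :
  picard_map F1 t0 p Xl Yl t = Xl t /\ picard_map F2 t0 q Xl Yl t = Yl t.
Proof.
  destruct picard_limit_continuous as [HXl HYl].
  assert (Happrox : forall n, Rabs (picard_map F1 t0 p Xl Yl t - X (S n) t) <= C0 * E t * (/ 2) ^ n /\
                              Rabs (picard_map F2 t0 q Xl Yl t - Y (S n) t) <= C0 * E t * (/ 2) ^ n).
  { intro n. destruct (picard_iterate_continuous n) as [HX HY].
    assert (HB : 0 <= 4 * C0 * (/ 2) ^ n) by (apply Rmult_le_pos; [lra | apply pow_le; lra]).
    assert (Hn : forall x, Rabs (Xl x - X n x) + Rabs (Yl x - Y n x)
                           <= 4 * C0 * (/ 2) ^ n * exp (K * Rabs (x - t0))).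
    { intro x. destruct (picard_limit x) as [_ [_ Hx]].
      replace (4 * C0 * (/ 2) ^ n * exp (K * Rabs (x - t0))) with (4 * C0 * E x * (/ 2) ^ n)
        by (unfold E; ring). apply Hx. }
    replace (C0 * E t * (/ 2) ^ n) with (L * (4 * C0 * (/ 2) ^ n) / K * exp (K * Rabs (t - t0)))
      by (unfold E, K; field; lra).
    split.
    - exact (picard_map_contraction F1 t0 p L (Rlt_le _ _ L_pos) F1_lipschitz F1_continuous
        _ _ _ _ K _ HXl HYl HX HY ltac:(unfold K; lra) HB Hn t).
    - exact (picard_map_contraction F2 t0 q L (Rlt_le _ _ L_pos) F2_lipschitz F2_continuous
        _ _ _ _ K _ HXl HYl HX HY ltac:(unfold K; lra) HB Hn t). }
  destruct (picard_limit t) as [_ [_ Hlim]].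
  assert (Hlim' : forall n, Rabs (Xl t - X (S n) t) <= 2 * C0 * E t * (/ 2) ^ n /\
                            Rabs (Yl t - Y (S n) t) <= 2 * C0 * E t * (/ 2) ^ n).
  { intro n. specialize (Hlim (S n)). simpl pow in Hlim.
    pose proof (Rabs_pos (Xl t - X (S n) t)). pose proof (Rabs_pos (Yl t - Y (S n) t)). lra. }
  split; apply Rminus_diag_uniq, (eq0_of_abs_le_geom _ (3 * C0 * E t)); intro n;
    destruct (Happrox n) as [A1 A2]; destruct (Hlim' n) as [B1 B2].
  - replace (picard_map F1 t0 p Xl Yl t - Xl t)
      with ((picard_map F1 t0 p Xl Yl t - X (S n) t) - (Xl t - X (S n) t)) by ring.
    eapply Rle_trans; [apply Rabs_triang |]. rewrite Rabs_Ropp. lra.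
  - replace (picard_map F2 t0 q Xl Yl t - Yl t)
      with ((picard_map F2 t0 q Xl Yl t - Y (S n) t) - (Yl t - Y (S n) t)) by ring.
    eapply Rle_trans; [apply Rabs_triang |]. rewrite Rabs_Ropp. lra.
Qed.

Theorem picard_global_solution : exists f g : R -> R, f t0 = p /\ g t0 = q /\
  forall t, is_derive f t (F1 t (f t) (g t)) /\ is_derive g t (F2 t (f t) (g t)).
Proof.
  destruct picard_limit_continuous as [HXl HYl].
  exists Xl, Yl.
  split; [rewrite <- (proj1 (picard_limit_fixed t0)); apply picard_map_start |].
  split; [rewrite <- (proj2 (picard_limit_fixed t0)); apply picard_map_start |].
  intro t. split.
  - apply (is_derive_ext (picard_map F1 t0 p Xl Yl)); [intro; apply picard_limit_fixed |].
    exact (is_derive_picard_map F1 t0 p F1_continuous _ _ HXl HYl t).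
  - apply (is_derive_ext (picard_map F2 t0 q Xl Yl)); [intro; apply picard_limit_fixed |].
    exact (is_derive_picard_map F2 t0 q F2_continuous _ _ HXl HYl t).
Qed.

End Picard.

(** * The metric coefficients *)

Definition rho (r : R -> R) (t : R) : R := sqrt (1 - / r t ^ 3).

(* The right-hand sides of the system after substituting [A = r rho / 3] and [B^2 = r^2 / 3]. *)
Definition Fplus (r : R -> R) (t x y : R) : R :=
  (x * (3 - rho r t ^ 2 - 3 * x) + y ^ 2 * rho r t ^ 2) / (r t * rho r t).
Definition Fminus (r : R -> R) (t x y : R) : R := 6 * y * (x - 1) / (r t * rho r t).

Section Coefficients.

Variable r : R -> R.
Hypothesis r_gt1 : forall t, 0 < t -> 1 < r t.
Hypothesis is_derive_B : forall t, 0 < t -> is_derive (B_of r) t (A_of r t / B_of r t).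

Lemma inv_r3_bounds t : 0 < t -> 0 < / r t ^ 3 < 1.
Proof.
  intro Ht. pose proof (r_gt1 t Ht).
  assert (1 < r t ^ 3) by (simpl; nra).
  split; [apply Rinv_0_lt_compat; lra |].
  rewrite <- Rinv_1. apply Rinv_lt_contravar; lra.
Qed.

Lemma rho_sqr t : 0 < t -> rho r t ^ 2 = 1 - / r t ^ 3.
Proof.
  intro Ht. pose proof (inv_r3_bounds t Ht). unfold rho.
  rewrite <- Rsqr_pow2. apply Rsqr_sqrt. lra.
Qed.

Lemma rho_bounds t : 0 < t -> 0 < rho r t < 1.
Proof.
  intro Ht. pose proof (inv_r3_bounds t Ht). unfold rho. split.
  - apply sqrt_lt_R0. lra.
  - assert (sqrt (1 - / r t ^ 3) < sqrt 1) by (apply sqrt_lt_1_alt; lra).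
    now rewrite sqrt_1 in H0.
Qed.

Lemma A_of_rho t : A_of r t = r t * rho r t / 3.
Proof. unfold A_of, rho. field. Qed.

Lemma B_of_sqr t : B_of r t ^ 2 = r t ^ 2 / 3.
Proof.
  unfold B_of. pose proof (sqrt_lt_R0 3 ltac:(lra)).
  replace ((r t / sqrt 3) ^ 2) with (r t ^ 2 / (sqrt 3 * sqrt 3)) by (field; lra).
  now rewrite sqrt_sqrt by lra.
Qed.

Lemma is_derive_r t : 0 < t -> is_derive r t (rho r t).
Proof.
  intro Ht. pose proof (sqrt_lt_R0 3 ltac:(lra)). pose proof (sqrt_sqrt 3 ltac:(lra)).
  pose proof (r_gt1 t Ht).
  apply (is_derive_ext (fun s => sqrt 3 * B_of r s)).
  { intro s. change (sqrt 3 * (r s / sqrt 3) = r s). field. lra. }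
  replace (rho r t) with (sqrt 3 * (A_of r t / B_of r t)).
  - exact (is_derive_scal (B_of r) t (sqrt 3) _ (is_derive_B t Ht)).
  - rewrite A_of_rho. unfold B_of.
    replace (sqrt 3 * (r t * rho r t / 3 / (r t / sqrt 3))) with (sqrt 3 * sqrt 3 * rho r t / 3)
      by (field; lra).
    rewrite H0. field.
Qed.

Lemma r_le a b : 0 < a -> a <= b -> r a <= r b.
Proof.
  intros Ha Hab. apply (le_of_derive_nonneg r (rho r)); auto.
  - intros x Hx. apply is_derive_r. lra.
  - intros x Hx. apply Rlt_le, rho_bounds. lra.
Qed.

Lemma rho_le a b : 0 < a -> a <= b -> rho r a <= rho r b.
Proof.
  intros Ha Hab. unfold rho. apply sqrt_le_1_alt.
  pose proof (r_gt1 a Ha).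
  assert (r a ^ 3 <= r b ^ 3) by (apply pow_incr; split; [lra | now apply r_le]).
  assert (0 < r a ^ 3) by (apply pow_lt; lra).
  assert (/ r b ^ 3 <= / r a ^ 3) by (apply Rinv_le_contravar; lra).
  lra.
Qed.

Lemma solves_at_iff fp fm t : 0 < t -> solves_at r fp fm t <->
  is_derive fp t (Fplus r t (fp t) (fm t)) /\ is_derive fm t (Fminus r t (fp t) (fm t)).
Proof.
  intro Ht. pose proof (r_gt1 t Ht). pose proof (rho_bounds t Ht).
  unfold solves_at, Fplus, Fminus. rewrite B_of_sqr, A_of_rho.
  replace (fp t / (r t * rho r t / 3) * (1 - (r t * rho r t / 3) ^ 2 / (r t ^ 2 / 3) - fp t)
             + fm t ^ 2 * (r t * rho r t / 3 / (r t ^ 2 / 3)))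
    with ((fp t * (3 - rho r t ^ 2 - 3 * fp t) + fm t ^ 2 * rho r t ^ 2) / (r t * rho r t))
    by (field; lra).
  replace (2 * fm t / (r t * rho r t / 3) * (fp t - 1))
    with (6 * fm t * (fp t - 1) / (r t * rho r t)) by (field; lra).
  reflexivity.
Qed.

End Coefficients.

(** * The trapping region *)

Lemma barrier_exists rho0 q p : 0 < rho0 < 1 -> 0 < q < 1 -> p < 1 ->
  exists P, p < P < 1 /\ 3 * P * (1 - P) <= rho0 ^ 2 * (P - q ^ 2).
Proof.
  intros Hrho Hq Hp.
  set (eps := rho0 ^ 2 * (1 - q ^ 2) / 6).
  assert (Heps : 0 < eps < 1/6).
  { unfold eps. assert (0 < rho0 ^ 2 < 1) by (simpl; nra).
    assert (0 < 1 - q ^ 2 < 1) by (simpl; nra). split; nra. }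
  exists (Rmax ((p + 1) / 2) (1 - eps)).
  set (P := Rmax ((p + 1) / 2) (1 - eps)).
  assert (HP1 : (p + 1) / 2 <= P) by apply Rmax_l.
  assert (HP2 : 1 - eps <= P) by apply Rmax_r.
  assert (HP3 : P < 1) by (apply Rmax_lub_lt; lra).
  assert (Hq2 : q ^ 2 <= 1 - eps).
  { unfold eps. assert (rho0 ^ 2 <= 1) by (simpl; nra). assert (0 <= 1 - q ^ 2) by (simpl; nra). nra. }
  split; [lra |].
  assert (3 * P * (1 - P) <= 3 * eps) by nra.
  assert (rho0 ^ 2 * (1 - eps - q ^ 2) <= rho0 ^ 2 * (P - q ^ 2))
    by (apply Rmult_le_compat_l; [apply pow2_ge_0 | lra]).
  assert (rho0 ^ 2 * (1 - eps - q ^ 2) = 6 * eps - rho0 ^ 2 * eps) by (unfold eps; field).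
  assert (rho0 ^ 2 <= 1) by (simpl; nra).
  nra.
Qed.

Section Invariance.

Variable r : R -> R.
Hypothesis r_gt1 : forall t, 0 < t -> 1 < r t.
Hypothesis is_derive_B : forall t, 0 < t -> is_derive (B_of r) t (A_of r t / B_of r t).
Variables (fp fm : R -> R) (t0 p q : R).
Hypothesis t0_pos : 0 < t0.
Hypothesis q_pos : 0 < q.
Hypothesis fp_t0 : fp t0 = p.
Hypothesis fm_t0 : fm t0 = q.
Hypothesis fp_fm_continuous : forall t, t0 <= t -> continuous fp t /\ continuous fm t.
Hypothesis derive_in_box : forall t, t0 <= t -> 0 < fm t < 1 -> 2/3 < fp t < 1 ->
  is_derive fp t (Fplus r t (fp t) (fm t)) /\ is_derive fm t (Fminus r t (fp t) (fm t)).

Let D0 : R := r t0 * rho r t0.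

Lemma denominator_ge s : t0 <= s -> 0 < D0 <= r s * rho r s.
Proof.
  intro Hs. pose proof (r_gt1 t0 t0_pos). pose proof (rho_bounds r r_gt1 t0 t0_pos).
  pose proof (r_le r r_gt1 is_derive_B t0 s t0_pos Hs).
  pose proof (rho_le r r_gt1 is_derive_B t0 s t0_pos Hs).
  unfold D0. split; [nra | apply Rmult_le_compat; lra].
Qed.

Lemma Fminus_nonpos s x y : t0 <= s -> 0 < y -> x < 1 -> Fminus r s x y <= 0.
Proof.
  intros Hs Hy Hx. destruct (denominator_ge s Hs) as [HD0 HD]. unfold Fminus, Rdiv.
  apply Rmult_le_0_r; [nra | apply Rlt_le, Rinv_0_lt_compat; lra].
Qed.

Lemma Fminus_ge s x y : t0 <= s -> 0 < y -> 2/3 < x -> - (2 / D0) * y <= Fminus r s x y.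
Proof.
  intros Hs Hy Hx. pose proof (denominator_ge s Hs).
  replace (- (2 / D0) * y) with (- (2 * y) / D0) by (field; lra).
  unfold Fminus. apply Rdiv_ge_compat_denom; [auto | lra | nra].
Qed.

Lemma Fplus_ge s x y : t0 <= s -> 2/3 < x < 1 -> - (3 / D0) * (x - 2/3) <= Fplus r s x y.
Proof.
  intros Hs Hx. pose proof (denominator_ge s Hs).
  pose proof (rho_bounds r r_gt1 s ltac:(lra)).
  replace (- (3 / D0) * (x - 2/3)) with (- (3 * (x - 2/3)) / D0) by (field; lra).
  unfold Fplus. apply Rdiv_ge_compat_denom; [auto | lra |].
  assert (0 <= 1 - rho r s ^ 2) by (simpl; nra).
  assert (0 <= y ^ 2 * rho r s ^ 2) by (apply Rmult_le_pos; apply pow2_ge_0).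
  nra.
Qed.

(* At the barrier [x = P] the drift of [f_+] is nonpositive; this is where the choice of [P] enters. *)
Lemma Fplus_le_barrier P s x y : 3 * P * (1 - P) <= rho r t0 ^ 2 * (P - q ^ 2) -> P < 1 ->
  t0 <= s -> 2/3 < x < P -> 0 <= y <= q -> Fplus r s x y <= (4 / D0) * (P - x).
Proof.
  intros HP HP1 Hs Hx Hy. pose proof (denominator_ge s Hs).
  pose proof (rho_bounds r r_gt1 s ltac:(lra)). pose proof (rho_bounds r r_gt1 t0 t0_pos).
  pose proof (rho_le r r_gt1 is_derive_B t0 s t0_pos Hs).
  replace ((4 / D0) * (P - x)) with (4 * (P - x) / D0) by (field; lra).
  unfold Fplus. apply Rdiv_le_compat_denom; [auto | lra |].
  set (w := rho r s ^ 2).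
  assert (Hw : rho r t0 ^ 2 <= w <= 1) by (unfold w; split; [apply pow_incr; lra | simpl; nra]).
  assert (Hy2 : y ^ 2 <= q ^ 2) by (apply pow_incr; lra).
  assert (Hat_barrier : 3 * P * (1 - P) - w * P + y ^ 2 * w <= 0).
  { assert (rho r t0 ^ 2 * (P - q ^ 2) <= w * (P - y ^ 2)) by (apply Rmult_le_compat; nra).
    nra. }
  assert (Hbelow : (P - x) * (w + 3 * (x + P - 1)) <= (P - x) * 4)
    by (apply Rmult_le_compat_l; lra).
  replace (x * (3 - w - 3 * x) + y ^ 2 * w)
    with ((3 * P * (1 - P) - w * P + y ^ 2 * w) + (P - x) * (w + 3 * (x + P - 1))) by ring.
  lra.
Qed.

Section Barrier.

Variable P : R.
Hypothesis P_barrier : 3 * P * (1 - P) <= rho r t0 ^ 2 * (P - q ^ 2).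
Hypothesis p_lt_P : 2/3 < p < P.
Hypothesis P_lt1 : P < 1.
Hypothesis q_lt1 : q < 1.

Let box (s : R) : Prop := 0 < fm s < 1 /\ 2/3 < fp s < P.

Lemma fm_le_q_before t : (forall s, t0 <= s < t -> box s) -> forall s, t0 <= s < t -> fm s <= q.
Proof.
  intros Hbox s Hs. rewrite <- fm_t0.
  apply (le_of_derive_nonpos fm (fun x => Fminus r x (fp x) (fm x))); [lra | |];
    intros x Hx; destruct (Hbox x ltac:(lra)) as [Hm Hp].
  - apply derive_in_box; lra.
  - apply Fminus_nonpos; lra.
Qed.

(* Each constraint persists by [pos_of_derive_ge_linear]; [fm <= q] by continuity. *)
Lemma box_closed t : t0 <= t -> (forall s, t0 <= s < t -> box s) -> box t.
Proof.
  intros Ht Hbox.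
  destruct (fp_fm_continuous t Ht) as [Cp Cm].
  destruct (denominator_ge t0 (Rle_refl t0)) as [HD0 _].
  assert (Hd : forall s, t0 <= s < t ->
    is_derive fp s (Fplus r s (fp s) (fm s)) /\ is_derive fm s (Fminus r s (fp s) (fm s))).
  { intros s Hs. destruct (Hbox s Hs). apply derive_in_box; lra. }
  assert (Hq : fm t <= q).
  { destruct (Req_dec t0 t) as [<- | Hne]; [lra |].
    enough (- q <= - fm t) by lra.
    apply (continuous_ge_left (fun s => - fm s) (- q) t0 t); [lra | exact (continuous_opp fm t Cm) |].
    intros s Hs. pose proof (fm_le_q_before t Hbox s Hs). lra. }
  assert (HK : forall k, 0 <= k -> 0 <= k / D0)
    by (intros; apply Rmult_le_pos; [lra | apply Rlt_le, Rinv_0_lt_compat, HD0]).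
  split; split.
  - apply (pos_of_derive_ge_linear fm (fun s => Fminus r s (fp s) (fm s)) (2 / D0) t0 t);
      [apply HK; lra | lra | lra | exact Cm |].
    intros s Hs. destruct (Hbox s Hs). split; [apply Hd, Hs | apply Fminus_ge; lra].
  - lra.
  - enough (0 < fp t - 2/3) by lra.
    apply (pos_of_derive_ge_linear (fun s => fp s - 2/3) (fun s => Fplus r s (fp s) (fm s))
      (3 / D0) t0 t);
      [apply HK; lra | lra | lra | exact (continuous_minus _ _ t Cp (continuous_const _ t)) |].
    intros s Hs. destruct (Hbox s Hs).
    split; [apply is_derive_sub_const, Hd, Hs | apply Fplus_ge; lra].
  - enough (0 < P - fp t) by lra.
    apply (pos_of_derive_ge_linear (fun s => P - fp s) (fun s => - Fplus r s (fp s) (fm s))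
      (4 / D0) t0 t);
      [apply HK; lra | lra | lra | exact (continuous_minus _ _ t (continuous_const _ t) Cp) |].
    intros s Hs. destruct (Hbox s Hs). pose proof (fm_le_q_before t Hbox s Hs).
    split; [apply is_derive_const_sub, Hd, Hs |].
    enough (Fplus r s (fp s) (fm s) <= 4 / D0 * (P - fp s)) by lra.
    apply Fplus_le_barrier; lra.
Qed.

Lemma box_open t : t0 <= t -> box t -> locally t box.
Proof.
  intros Ht [[Hm1 Hm2] [Hp1 Hp2]]. destruct (fp_fm_continuous t Ht) as [Cp Cm].
  assert (H1 := locally_pos_of_continuous fm t Cm Hm1).
  assert (H2 := locally_pos_of_continuous (fun s => 1 - fm s) t
    (continuous_minus (fun _ => 1) fm t (continuous_const 1 t) Cm) ltac:(lra)).
  assert (H3 := locally_pos_of_continuous (fun s => fp s - 2/3) t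
    (continuous_minus fp (fun _ => 2/3) t Cp (continuous_const (2/3) t)) ltac:(lra)).
  assert (H4 := locally_pos_of_continuous (fun s => P - fp s) t
    (continuous_minus (fun _ => P) fp t (continuous_const P t) Cp) ltac:(lra)).
  generalize (filter_and _ _ (filter_and _ _ H1 H2) (filter_and _ _ H3 H4)).
  apply filter_imp. intros s [[A1 A2] [A3 A4]]. split; split; lra.
Qed.

Lemma box_invariant t : t0 <= t -> box t.
Proof. apply real_induction; [exact box_closed | exact box_open]. Qed.

End Barrier.

Theorem trapping_region : 2/3 < p < 1 -> q < 1 ->
  exists P, P < 1 /\ forall t, t0 <= t -> 0 < fm t <= q /\ 2/3 < fp t < P.
Proof.
  intros Hp Hq.
  destruct (barrier_exists (rho r t0) q p (rho_bounds r r_gt1 t0 t0_pos) ltac:(lra) ltac:(lra))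
    as [P [HpP HP]].
  exists P. split; [lra |]. intros t Ht.
  assert (Hbox : forall s, t0 <= s -> 0 < fm s < 1 /\ 2/3 < fp s < P)
    by (intros; apply box_invariant; auto; lra).
  destruct (Hbox t Ht) as [[Hm _] Hfp]. split; [split; [exact Hm |] | exact Hfp].
  apply (fm_le_q_before P ltac:(lra) (t + 1)); [| lra].
  intros s Hs. apply Hbox. lra.
Qed.

End Invariance.

(** * Decay in the trapping region *)

Section Asymptotics.

Variables r fp fm : R -> R.
Variables t0 P : R.
Hypothesis r_gt1 : forall t, 0 < t -> 1 < r t.
Hypothesis is_derive_B : forall t, 0 < t -> is_derive (B_of r) t (A_of r t / B_of r t).
Hypothesis t0_pos : 0 < t0.
Hypothesis P_lt1 : P < 1.
Hypothesis in_region : forall t, t0 <= t -> 0 < fm t /\ 2/3 < fp t < P.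
Hypothesis solves : forall t, t0 <= t ->
  is_derive fp t (Fplus r t (fp t) (fm t)) /\ is_derive fm t (Fminus r t (fp t) (fm t)).

Let rho0 : R := rho r t0.

Lemma coefficients_after t : t0 <= t ->
  1 < r t /\ r t0 <= r t /\ 0 < rho0 <= rho r t /\ rho r t < 1 /\ 1 - rho r t ^ 2 = / r t ^ 3.
Proof.
  intro Ht.
  pose proof (rho_bounds r r_gt1 t0 t0_pos). pose proof (rho_bounds r r_gt1 t ltac:(lra)).
  split; [apply r_gt1; lra |]. split; [apply r_le; auto |].
  split; [split; [unfold rho0; lra | apply rho_le; auto] |]. split; [lra |].
  rewrite (rho_sqr r r_gt1) by lra. ring.
Qed.

Lemma is_derive_r_after t : t0 <= t -> is_derive r t (rho r t).
Proof. intro Ht. apply is_derive_r; auto. lra. Qed.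

Lemma r_ge_linear t : t0 <= t -> r t0 + rho0 * (t - t0) <= r t.
Proof.
  intro Ht. enough (r t0 - rho0 * t0 <= r t - rho0 * t) by lra.
  apply (le_of_derive_nonneg (fun x => r x - rho0 * x) (fun x => rho r x - rho0)); auto.
  - intros x Hx. pose proof (is_derive_r_after x ltac:(lra)) as Dr.
    auto_derive; [now exists (rho r x) |]. rewrite_Derive Dr. ring.
  - intros x Hx. destruct (coefficients_after x ltac:(lra)) as [_ [_ [[_ H] _]]]. lra.
Qed.

Lemma r_minus_t_bounded : exists D, 0 <= D /\ forall t, t0 <= t -> Rabs (r t - t) <= D.
Proof.
  destruct (coefficients_after t0 (Rle_refl t0)) as [Hr0 [_ [[Hrho0 _] _]]].
  exists (Rabs (r t0 - t0) + / (2 * rho0)).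
  assert (0 < / (2 * rho0)) by (apply Rinv_0_lt_compat; lra).
  split; [pose proof (Rabs_pos (r t0 - t0)); lra |].
  intros t Ht.
  assert (Hup : r t - t <= r t0 - t0).
  { apply (le_of_derive_nonpos (fun x => r x - x) (fun x => rho r x - 1)); auto.
    - intros x Hx. pose proof (is_derive_r_after x ltac:(lra)) as Dr.
      auto_derive; [now exists (rho r x) |]. rewrite_Derive Dr. ring.
    - intros x Hx. destruct (coefficients_after x ltac:(lra)) as [_ [_ [_ [Hrho _]]]]. lra. }
  (* [1 - rho <= 1 - rho^2 = r^-3] is compensated by the derivative of [- 1 / (2 rho0 r^2)]. *)
  assert (Hlow : r t0 - t0 - / (2 * rho0 * r t0 ^ 2) <= r t - t - / (2 * rho0 * r t ^ 2)).
  { apply (le_of_derive_nonneg (fun x => r x - x - / (2 * rho0 * r x ^ 2))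
       (fun x => rho r x - 1 + rho r x / (rho0 * r x ^ 3))); auto.
    - intros x Hx. pose proof (is_derive_r_after x ltac:(lra)) as Dr.
      destruct (coefficients_after x ltac:(lra)) as [H1 _].
      auto_derive; [ex_derive_from_hyps; apply Rgt_not_eq, Rmult_lt_0_compat; nra |].
      rewrite_Derive Dr. field. lra.
    - intros x Hx. destruct (coefficients_after x ltac:(lra)) as [H1 [_ [[_ H2] [H3 H4]]]].
      assert (Hcomp : / r x ^ 3 <= rho r x / (rho0 * r x ^ 3)).
      { replace (rho r x / (rho0 * r x ^ 3)) with (/ r x ^ 3 * (rho r x / rho0)) by (field; lra).
        apply Rle_mult_ratio; [apply Rlt_le, Rinv_0_lt_compat, pow_lt |]; lra. }
      rewrite <- H4 in Hcomp. nra. }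
  assert (/ (2 * rho0 * r t0 ^ 2) <= / (2 * rho0)).
  { apply Rinv_le_contravar; [lra |]. assert (1 <= r t0 ^ 2) by (simpl; nra). nra. }
  assert (0 <= / (2 * rho0 * r t ^ 2)).
  { destruct (coefficients_after t Ht) as [H1 _].
    apply Rlt_le, Rinv_0_lt_compat, Rmult_lt_0_compat; [lra | apply pow_lt; lra]. }
  pose proof (Rle_abs (r t0 - t0)). pose proof (Rle_abs (- (r t0 - t0))). rewrite Rabs_Ropp in *.
  apply Rabs_le. lra.
Qed.

Lemma inv_r_comparison (g dg : R -> R) K : 0 <= K ->
  (forall x, t0 <= x -> is_derive g x (dg x)) ->
  (forall x, t0 <= x -> dg x <= K / r x ^ 2) ->
  forall t s, t0 <= t <= s -> g s + K / rho0 / r s <= g t + K / rho0 / r t.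
Proof.
  intros HK Hd Hb t s Hts.
  apply (le_of_derive_nonpos (fun x => g x + K / rho0 / r x)
    (fun x => dg x - K / rho0 * rho r x / r x ^ 2)); [lra | |].
  - intros x Hx. pose proof (Hd x ltac:(lra)) as Dg. pose proof (is_derive_r_after x ltac:(lra)) as Dr.
    destruct (coefficients_after x ltac:(lra)) as [H1 [_ [[H2 _] _]]].
    auto_derive; [ex_derive_from_hyps; lra |].
    rewrite_Derive Dg. rewrite_Derive Dr. field. lra.
  - intros x Hx. destruct (coefficients_after x ltac:(lra)) as [H1 [_ [[H2 H3] _]]].
    specialize (Hb x ltac:(lra)).
    replace (K / rho0 * rho r x / r x ^ 2) with (K / r x ^ 2 * (rho r x / rho0)) by (field; lra).
    enough (K / r x ^ 2 <= K / r x ^ 2 * (rho r x / rho0)) by lra.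
    apply Rle_mult_ratio; [| lra].
    apply Rmult_le_pos; [exact HK | apply Rlt_le, Rinv_0_lt_compat, pow_lt; lra].
Qed.

Lemma converges_at_inv_r_rate (g dg : R -> R) K : 0 <= K ->
  (forall x, t0 <= x -> is_derive g x (dg x)) ->
  (forall x, t0 <= x -> Rabs (dg x) <= K / r x ^ 2) ->
  exists L, forall t, t0 <= t -> Rabs (g t - L) <= K / rho0 / r t.
Proof.
  intros HK Hd Hb.
  destruct (coefficients_after t0 (Rle_refl t0)) as [_ [_ [[Hrho0 _] _]]].
  apply exists_limit_of_monotone_bounds.
  - intros t Ht. destruct (coefficients_after t Ht) as [H1 _].
    apply Rmult_le_pos; [apply Rmult_le_pos; [lra | apply Rlt_le, Rinv_0_lt_compat; lra] |].
    apply Rlt_le, Rinv_0_lt_compat. lra.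
  - apply (inv_r_comparison g dg K HK Hd).
    intros x Hx. specialize (Hb x Hx). apply Rabs_le_between in Hb. lra.
  - intros t s Hts.
    pose proof (inv_r_comparison (fun x => - g x) (fun x => - dg x) K HK) as Hc.
    enough (- g s + K / rho0 / r s <= - g t + K / rho0 / r t) by lra.
    apply Hc; [| | exact Hts].
    + intros x Hx. exact (is_derive_opp g x (dg x) (Hd x Hx)).
    + intros x Hx. specialize (Hb x Hx). apply Rabs_le_between in Hb. lra.
Qed.

Lemma limit_ge (g : R -> R) L a m T : 0 <= a ->
  (forall t, t0 <= t -> Rabs (g t - L) <= a / r t) -> (forall t, T <= t -> m <= g t) -> m <= L.
Proof.
  intros Ha HL Hm. apply Rnot_lt_le. intro Hlt.
  destruct (coefficients_after t0 (Rle_refl t0)) as [Hr0 [_ [[Hrho0 _] _]]].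
  set (t := Rmax (Rmax T t0) (t0 + a / ((m - L) * rho0) + 1)).
  assert (HT : T <= t /\ t0 <= t).
  { pose proof (Rmax_l (Rmax T t0) (t0 + a / ((m - L) * rho0) + 1)).
    pose proof (Rmax_l T t0). pose proof (Rmax_r T t0). unfold t. lra. }
  destruct (coefficients_after t (proj2 HT)) as [Hr _].
  assert (Hrt : a < (m - L) * r t).
  { pose proof (r_ge_linear t (proj2 HT)).
    assert (t0 + a / ((m - L) * rho0) + 1 <= t) by apply Rmax_r.
    assert (rho0 * (a / ((m - L) * rho0) + 1) <= rho0 * (t - t0)) by (apply Rmult_le_compat_l; lra).
    replace (rho0 * (a / ((m - L) * rho0) + 1)) with (a / (m - L) + rho0) in H1 by (field; lra).
    assert (H2 : a / (m - L) + rho0 <= r t) by lra.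
    apply Rmult_le_compat_l with (r := m - L) in H2; [| lra].
    replace ((m - L) * (a / (m - L) + rho0)) with (a + (m - L) * rho0) in H2 by (field; lra).
    nra. }
  assert (a / r t < m - L).
  { apply (Rmult_lt_reg_r (r t)); [lra |]. unfold Rdiv. rewrite Rmult_assoc, Rinv_l by lra. lra. }
  specialize (HL t (proj2 HT)). specialize (Hm t (proj1 HT)).
  apply Rabs_le_between in HL. lra.
Qed.

Let u (t : R) : R := fp t - 2/3.
Let G (t : R) : R := r t ^ 2 * u t.
Let H (t : R) : R := r t ^ 2 * fm t.
Let dG (t : R) : R :=
  r t * ((2/3 - u t) * (1 - rho r t ^ 2) - 3 * u t ^ 2 + fm t ^ 2 * rho r t ^ 2) / rho r t.
Let dH (t : R) : R := r t * fm t * (6 * u t - 2 * (1 - rho r t ^ 2)) / rho r t.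

Lemma is_derive_G t : t0 <= t -> is_derive G t (dG t).
Proof.
  intro Ht. destruct (solves t Ht) as [Dp _]. pose proof (is_derive_r_after t Ht) as Dr.
  destruct (coefficients_after t Ht) as [H1 [_ [[H2 H3] _]]].
  unfold G, u. auto_derive; [ex_derive_from_hyps |].
  rewrite_Derive Dp. rewrite_Derive Dr. unfold dG, u, Fplus. field. lra.
Qed.

Lemma is_derive_H t : t0 <= t -> is_derive H t (dH t).
Proof.
  intro Ht. destruct (solves t Ht) as [_ Dm]. pose proof (is_derive_r_after t Ht) as Dr.
  destruct (coefficients_after t Ht) as [H1 [_ [[H2 H3] _]]].
  unfold H, u. auto_derive; [ex_derive_from_hyps |].
  rewrite_Derive Dm. rewrite_Derive Dr. unfold dH, u, Fminus. field. lra.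
Qed.

Let beta : R := Rmin (6 * (1 - P)) (1/2).

Lemma beta_bounds : 0 < beta <= 1/2 /\ beta <= 6 * (1 - P).
Proof.
  unfold beta. pose proof (Rmin_l (6 * (1 - P)) (1/2)). pose proof (Rmin_r (6 * (1 - P)) (1/2)).
  split; [split; [apply Rmin_glb_lt |] |]; lra.
Qed.

(* [fm r^beta] is nonincreasing, because [6 (fp - 1) <= - beta]. *)
Lemma fm_decay : exists K1, 0 < K1 /\ forall t, t0 <= t -> fm t <= K1 * Rpower (r t) (- beta).
Proof.
  destruct beta_bounds as [Hb Hb6].
  exists (fm t0 * Rpower (r t0) beta).
  split; [apply Rmult_lt_0_compat; [apply in_region; lra | apply exp_pos] |].
  intros t Ht.
  assert (Hmono : fm t * Rpower (r t) beta <= fm t0 * Rpower (r t0) beta).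
  { apply (le_of_derive_nonpos (fun x => fm x * Rpower (r x) beta)
      (fun x => fm x * Rpower (r x) beta * (6 * (fp x - 1) + beta * rho r x ^ 2) / (r x * rho r x)));
      [exact Ht | |].
    - intros x Hx. destruct (solves x ltac:(lra)) as [_ Dm].
      pose proof (is_derive_r_after x ltac:(lra)) as Dr.
      destruct (coefficients_after x ltac:(lra)) as [H1 [_ [[H2 H3] _]]].
      unfold Rpower. auto_derive; [ex_derive_from_hyps; lra |].
      rewrite_Derive Dm. rewrite_Derive Dr. unfold Fminus. field. lra.
    - intros x Hx. destruct (coefficients_after x ltac:(lra)) as [H1 [_ [[H2 H3] [H4 _]]]].
      destruct (in_region x ltac:(lra)) as [Hm Hp].
      assert (6 * (fp x - 1) + beta * rho r x ^ 2 <= 0) by (assert (rho r x ^ 2 <= 1) by (simpl; nra); nra).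
      assert (0 < fm x * Rpower (r x) beta) by (apply Rmult_lt_0_compat; [lra | apply exp_pos]).
      unfold Rdiv. apply Rmult_le_0_r; [nra | apply Rlt_le, Rinv_0_lt_compat; nra]. }
  rewrite Rpower_Ropp.
  assert (Hpos : 0 < Rpower (r t) beta) by apply exp_pos.
  apply (Rmult_le_reg_r (Rpower (r t) beta)); [exact Hpos |].
  rewrite Rmult_assoc, Rinv_l, Rmult_1_r by lra. exact Hmono.
Qed.

Lemma dG_upper x : t0 <= x -> dG x <= (2/3 / r x ^ 2 + r x * fm x ^ 2) / rho0.
Proof.
  intro Hx. destruct (coefficients_after x Hx) as [H1 [_ [[H2 H3] [H4 H5]]]].
  destruct (in_region x Hx) as [Hm Hp].
  assert (Hu : 0 < u x) by (unfold u; lra).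
  assert (HR : r x * (1 - rho r x ^ 2) = / r x ^ 2) by (rewrite H5; field; lra).
  assert (0 < / r x ^ 2) by (apply Rinv_0_lt_compat, pow_lt; lra).
  unfold dG. apply Rdiv_le_compat_denom; [lra | |].
  - apply Rplus_le_le_0_compat; [unfold Rdiv; nra | apply Rmult_le_pos; [lra | apply pow2_ge_0]].
  - replace (r x * ((2 / 3 - u x) * (1 - rho r x ^ 2) - 3 * u x ^ 2 + fm x ^ 2 * rho r x ^ 2))
      with ((2 / 3 - u x) * (r x * (1 - rho r x ^ 2)) - 3 * r x * u x ^ 2
            + r x * fm x ^ 2 * rho r x ^ 2) by ring.
    rewrite HR. assert (0 <= fm x ^ 2) by apply pow2_ge_0.
    assert (rho r x ^ 2 <= 1) by (simpl; nra).
    assert (0 <= u x ^ 2) by apply pow2_ge_0.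
    assert (r x * fm x ^ 2 * rho r x ^ 2 <= r x * fm x ^ 2)
      by (rewrite <- (Rmult_1_r (r x * fm x ^ 2)) at 2; apply Rmult_le_compat_l; nra).
    unfold Rdiv. nra.
Qed.

Lemma dG_le_power K1 x : t0 <= x -> fm x <= K1 * Rpower (r x) (- beta) ->
  dG x <= (2/3 + K1 ^ 2) * (r x * Rpower (r x) (- (2 * beta))) / rho0.
Proof.
  intros Hx Hfm. destruct beta_bounds as [Hb _].
  destruct (coefficients_after x Hx) as [H1 [_ [[Hrho0 _] _]]].
  set (W := Rpower (r x) (- (2 * beta))).
  assert (Hfm2 : fm x ^ 2 <= K1 ^ 2 * W).
  { replace (K1 ^ 2 * W) with ((K1 * Rpower (r x) (- beta)) ^ 2)
      by (unfold W; rewrite Rpow_mult_distr; f_equal; simpl;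
          rewrite Rmult_1_r, <- Rpower_plus; f_equal; ring).
    apply pow_incr. split; [apply Rlt_le, in_region |]; lra. }
  assert (Hinv : / r x ^ 3 <= W) by (apply Rpower_le_inv_pow; simpl; lra).
  eapply Rle_trans; [apply dG_upper, Hx |].
  apply Rmult_le_compat_r; [apply Rlt_le, Rinv_0_lt_compat; lra |].
  replace (2 / 3 / r x ^ 2) with (2/3 * (r x * / r x ^ 3)) by (field; lra).
  assert (r x * / r x ^ 3 <= r x * W) by (apply Rmult_le_compat_l; lra).
  assert (r x * fm x ^ 2 <= r x * (K1 ^ 2 * W)) by (apply Rmult_le_compat_l; lra).
  nra.
Qed.

(* Comparison with [c r^(2 - 2 beta)], whose derivative dominates the bound of [dG_le_power]. *)
Lemma u_decay : exists C2, 0 <= C2 /\ forall t, t0 <= t -> u t <= C2 * Rpower (r t) (- (2 * beta)).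
Proof.
  destruct beta_bounds as [Hb Hb6]. destruct fm_decay as [K1 [HK1 Hfm]].
  destruct (coefficients_after t0 (Rle_refl t0)) as [_ [_ [[Hrho0 _] _]]].
  set (c := (2/3 + K1 ^ 2) / ((2 - 2 * beta) * rho0 ^ 2)).
  assert (Hc : 0 <= c).
  { unfold c. apply Rmult_le_pos; [nra | apply Rlt_le, Rinv_0_lt_compat, Rmult_lt_0_compat; [lra | nra]]. }
  set (Psi := fun x => G x - c * Rpower (r x) (2 - 2 * beta)).
  assert (Hdec : forall t, t0 <= t -> Psi t <= Psi t0).
  { intros t Ht.
    apply (le_of_derive_nonpos Psi
      (fun x => dG x - c * (2 - 2 * beta) * Rpower (r x) (2 - 2 * beta) * rho r x / r x)); [exact Ht | |].
    - intros x Hx. pose proof (is_derive_G x ltac:(lra)) as Dg.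
      pose proof (is_derive_r_after x ltac:(lra)) as Dr.
      destruct (coefficients_after x ltac:(lra)) as [H1 _].
      unfold Psi, Rpower. auto_derive; [ex_derive_from_hyps; lra |].
      rewrite_Derive Dg. rewrite_Derive Dr. field. lra.
    - intros x Hx. destruct (coefficients_after x ltac:(lra)) as [H1 [_ [[_ H3] _]]].
      pose proof (dG_le_power K1 x ltac:(lra) (Hfm x ltac:(lra))) as Hup.
      assert (HW : 0 < Rpower (r x) (- (2 * beta))) by apply exp_pos.
      enough ((2/3 + K1 ^ 2) * (r x * Rpower (r x) (- (2 * beta))) / rho0
              <= c * (2 - 2 * beta) * Rpower (r x) (2 - 2 * beta) * rho r x / r x) by lra.
      rewrite Rpower_2_minus by lra.
      replace (c * (2 - 2 * beta) * (r x ^ 2 * Rpower (r x) (- (2 * beta))) * rho r x / r x)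
        with ((2/3 + K1 ^ 2) * (r x * Rpower (r x) (- (2 * beta))) / rho0 * (rho r x / rho0))
        by (unfold c; field; lra).
      apply Rle_mult_ratio; [| lra].
      apply Rmult_le_pos; [apply Rmult_le_pos; nra | apply Rlt_le, Rinv_0_lt_compat; lra]. }
  exists (Rmax (Psi t0) 0 + c). split; [pose proof (Rmax_r (Psi t0) 0); lra |].
  intros t Ht. specialize (Hdec t Ht).
  destruct (coefficients_after t Ht) as [H1 _].
  set (W := Rpower (r t) (- (2 * beta))).
  assert (HW : 0 < W) by apply exp_pos.
  assert (Hinv : / r t ^ 2 <= W) by (apply Rpower_le_inv_pow; simpl; lra).
  assert (Hr2 : 0 < r t ^ 2) by (apply pow_lt; lra).
  assert (HPsi : Psi t = r t ^ 2 * u t - c * (r t ^ 2 * W))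
    by (unfold Psi, G, W; rewrite Rpower_2_minus by lra; ring).
  assert (u t <= Rmax (Psi t0) 0 * / r t ^ 2 + c * W).
  { apply (Rmult_le_reg_l (r t ^ 2)); [exact Hr2 |].
    replace (r t ^ 2 * (Rmax (Psi t0) 0 * / r t ^ 2 + c * W)) with (Rmax (Psi t0) 0 + c * (r t ^ 2 * W))
      by (field; lra).
    pose proof (Rmax_l (Psi t0) 0). lra. }
  pose proof (Rmax_r (Psi t0) 0). nra.
Qed.

Lemma dH_le_power C2 x : t0 <= x -> 0 <= C2 -> u x <= C2 * Rpower (r x) (- (2 * beta)) ->
  dH x <= 6 * r x * fm x * C2 * Rpower (r x) (- (2 * beta)) / rho0.
Proof.
  intros Hx HC2 Hu. destruct (coefficients_after x Hx) as [H1 [_ [[Hrho0 H3] [H4 _]]]].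
  destruct (in_region x Hx) as [Hm _].
  set (W := Rpower (r x) (- (2 * beta))) in *.
  assert (HW : 0 < W) by apply exp_pos.
  unfold dH. apply Rdiv_le_compat_denom; [lra | repeat apply Rmult_le_pos; lra |].
  assert (0 <= 1 - rho r x ^ 2) by (simpl; nra).
  assert (r x * fm x * (6 * u x - 2 * (1 - rho r x ^ 2)) <= r x * fm x * (6 * (C2 * W)))
    by (apply Rmult_le_compat_l; nra).
  lra.
Qed.

(* [H exp (c r^(-2 beta))] is nonincreasing for [c] large enough, by [dH_le_power]. *)
Lemma H_bounded : exists C3, 0 <= C3 /\ forall t, t0 <= t -> H t <= C3.
Proof.
  destruct beta_bounds as [Hb Hb6]. destruct u_decay as [C2 [HC2 Hu2]].
  destruct (coefficients_after t0 (Rle_refl t0)) as [_ [_ [[Hrho0 _] _]]].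
  set (c := 3 * C2 / (beta * rho0 ^ 2)).
  assert (Hc : 0 <= c).
  { unfold c. apply Rmult_le_pos; [lra | apply Rlt_le, Rinv_0_lt_compat, Rmult_lt_0_compat; nra]. }
  set (Theta := fun x => H x * exp (c * Rpower (r x) (- (2 * beta)))).
  assert (Hdec : forall t, t0 <= t -> Theta t <= Theta t0).
  { intros t Ht.
    apply (le_of_derive_nonpos Theta (fun x => exp (c * Rpower (r x) (- (2 * beta))) *
       (dH x - H x * c * (2 * beta) * Rpower (r x) (- (2 * beta)) * rho r x / r x))); [exact Ht | |].
    - intros x Hx. pose proof (is_derive_H x ltac:(lra)) as Dh.
      pose proof (is_derive_r_after x ltac:(lra)) as Dr.
      destruct (coefficients_after x ltac:(lra)) as [H1 _].
      unfold Theta, Rpower. auto_derive; [ex_derive_from_hyps; lra |].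
      rewrite_Derive Dh. rewrite_Derive Dr. field. lra.
    - intros x Hx. destruct (coefficients_after x ltac:(lra)) as [H1 [_ [[_ H3] _]]].
      destruct (in_region x ltac:(lra)) as [Hm _].
      pose proof (dH_le_power C2 x ltac:(lra) HC2 (Hu2 x ltac:(lra))) as Hup.
      set (W := Rpower (r x) (- (2 * beta))) in *.
      assert (HW : 0 < W) by apply exp_pos.
      assert (Hdown : 6 * r x * fm x * C2 * W / rho0 <= H x * c * (2 * beta) * W * rho r x / r x).
      { unfold H. replace (r x ^ 2 * fm x * c * (2 * beta) * W * rho r x / r x)
          with (6 * r x * fm x * C2 * W / rho0 * (rho r x / rho0)) by (unfold c; field; lra).
        apply Rle_mult_ratio; [| lra].
        apply Rmult_le_pos; [repeat apply Rmult_le_pos; lra | apply Rlt_le, Rinv_0_lt_compat; lra]. }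
      apply Rmult_le_0_l; [apply Rlt_le, exp_pos | lra]. }
  assert (HH0 : forall t, t0 <= t -> 0 <= H t).
  { intros t Ht. destruct (in_region t Ht) as [Hm _]. apply Rmult_le_pos; [apply pow2_ge_0 | lra]. }
  exists (Theta t0). split; [apply Rmult_le_pos; [apply HH0; lra | apply Rlt_le, exp_pos] |].
  intros t Ht. specialize (Hdec t Ht). specialize (HH0 t Ht).
  assert (0 <= c * Rpower (r t) (- (2 * beta))) by (apply Rmult_le_pos; [lra | apply Rlt_le, exp_pos]).
  pose proof (exp_ineq1_le (c * Rpower (r t) (- (2 * beta)))).
  unfold Theta in Hdec at 1. nra.
Qed.

Lemma fm_inv_sq_bound : exists C3, 0 <= C3 /\ forall t, t0 <= t -> fm t <= C3 / r t ^ 2.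
Proof.
  destruct H_bounded as [C3 [HC3 HH]]. exists C3. split; [exact HC3 |].
  intros t Ht. specialize (HH t Ht). destruct (coefficients_after t Ht) as [H1 _].
  assert (Hr2 : 0 < r t ^ 2) by (apply pow_lt; lra).
  apply (Rmult_le_reg_l (r t ^ 2)); [exact Hr2 |].
  replace (r t ^ 2 * (C3 / r t ^ 2)) with C3 by (field; lra). exact HH.
Qed.

Lemma dG_le_inv_sq C3 x : t0 <= x -> fm x <= C3 / r x ^ 2 -> dG x <= (2/3 + C3 ^ 2) / rho0 / r x ^ 2.
Proof.
  intros Hx Hfm. destruct (coefficients_after x Hx) as [H1 [_ [[Hrho0 _] _]]].
  destruct (in_region x Hx) as [Hm _].
  eapply Rle_trans; [apply dG_upper, Hx |].
  assert (Hr2 : 0 < r x ^ 2) by (apply pow_lt; lra).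
  replace ((2/3 + C3 ^ 2) / rho0 / r x ^ 2) with ((2/3 / r x ^ 2 + C3 ^ 2 / r x ^ 2) / rho0)
    by (field; lra).
  apply Rmult_le_compat_r; [apply Rlt_le, Rinv_0_lt_compat; lra |].
  assert (r x * fm x ^ 2 <= C3 ^ 2 / r x ^ 2).
  { assert (fm x ^ 2 <= (C3 / r x ^ 2) ^ 2) by (apply pow_incr; lra).
    replace (C3 ^ 2 / r x ^ 2) with (r x * (C3 / r x ^ 2) ^ 2 * r x) by (field; lra).
    nra. }
  lra.
Qed.

Lemma u_inv_sq_bound : exists C4, 0 <= C4 /\ forall t, t0 <= t -> u t <= C4 / r t ^ 2.
Proof.
  destruct fm_inv_sq_bound as [C3 [HC3 Hfm]].
  destruct (coefficients_after t0 (Rle_refl t0)) as [_ [_ [[Hrho0 _] _]]].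
  set (K := (2/3 + C3 ^ 2) / rho0).
  assert (HK : 0 <= K) by (apply Rmult_le_pos; [nra | apply Rlt_le, Rinv_0_lt_compat; lra]).
  assert (Hcmp := inv_r_comparison G dG K HK is_derive_G).
  set (C4 := Rmax (G t0 + K / rho0 / r t0) 0).
  exists C4. split; [apply Rmax_r |]. intros t Ht.
  destruct (coefficients_after t Ht) as [H1 _].
  assert (Hr2 : 0 < r t ^ 2) by (apply pow_lt; lra).
  assert (HGt : G t <= C4).
  { assert (Hb : forall x, t0 <= x -> dG x <= K / r x ^ 2)
      by (intros x Hx; apply dG_le_inv_sq, Hfm; exact Hx).
    specialize (Hcmp Hb t0 t ltac:(lra)).
    assert (0 <= K / rho0 / r t).
    { apply Rmult_le_pos; [apply Rmult_le_pos; [exact HK |] |]; apply Rlt_le, Rinv_0_lt_compat; lra. }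
    pose proof (Rmax_l (G t0 + K / rho0 / r t0) 0). unfold C4. lra. }
  apply (Rmult_le_reg_l (r t ^ 2)); [exact Hr2 |].
  replace (r t ^ 2 * (C4 / r t ^ 2)) with C4 by (field; lra). exact HGt.
Qed.

Lemma dG_ge_inv_sq C4 x : t0 <= x -> u x <= C4 / r x ^ 2 ->
  - (3 * C4 ^ 2 / rho0) / r x ^ 2 <= dG x /\ (9 * C4 ^ 2 <= r x -> 0 <= dG x).
Proof.
  intros Hx Hu. destruct (coefficients_after x Hx) as [H1 [_ [[Hrho0 Hrho] [Hrho1 H5]]]].
  destruct (in_region x Hx) as [Hm Hp].
  assert (Hu0 : 0 < u x) by (unfold u; lra).
  assert (Hr2 : 0 < r x ^ 2) by (apply pow_lt; lra).
  assert (Hu2 : r x * u x ^ 2 <= C4 ^ 2 / r x ^ 3).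
  { assert (u x ^ 2 <= (C4 / r x ^ 2) ^ 2) by (apply pow_incr; lra).
    replace (C4 ^ 2 / r x ^ 3) with (r x * (C4 / r x ^ 2) ^ 2) by (field; lra). nra. }
  assert (HN : / 3 / r x ^ 2 - 3 * (C4 ^ 2 / r x ^ 3)
               <= r x * ((2 / 3 - u x) * (1 - rho r x ^ 2) - 3 * u x ^ 2 + fm x ^ 2 * rho r x ^ 2)).
  { replace (r x * ((2 / 3 - u x) * (1 - rho r x ^ 2) - 3 * u x ^ 2 + fm x ^ 2 * rho r x ^ 2))
      with (/ 3 / r x ^ 2 + (1/3 - u x) / r x ^ 2 - 3 * (r x * u x ^ 2) + r x * (fm x ^ 2 * rho r x ^ 2))
      by (rewrite H5; field; lra).
    assert (0 <= (1/3 - u x) / r x ^ 2)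
      by (apply Rmult_le_pos; [unfold u; lra | apply Rlt_le, Rinv_0_lt_compat; lra]).
    assert (0 <= r x * (fm x ^ 2 * rho r x ^ 2))
      by (apply Rmult_le_pos; [lra | apply Rmult_le_pos; apply pow2_ge_0]).
    lra. }
  assert (Hr32 : C4 ^ 2 / r x ^ 3 <= C4 ^ 2 / r x ^ 2).
  { apply Rmult_le_compat_l; [apply pow2_ge_0 |]. apply Rinv_le_contravar; [exact Hr2 | simpl; nra]. }
  split.
  - replace (- (3 * C4 ^ 2 / rho0) / r x ^ 2) with (- (3 * C4 ^ 2 / r x ^ 2) / rho0) by (field; lra).
    unfold dG. apply Rdiv_ge_compat_denom; [lra | |].
    + apply Rmult_le_pos; [apply Rmult_le_pos; [lra | apply pow2_ge_0] | apply Rlt_le, Rinv_0_lt_compat; lra].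
    + assert (0 <= / 3 / r x ^ 2) by (apply Rmult_le_pos; [lra | apply Rlt_le, Rinv_0_lt_compat; lra]).
      unfold Rdiv in *. lra.
  - intro H9. unfold dG, Rdiv. apply Rmult_le_pos; [| apply Rlt_le, Rinv_0_lt_compat; lra].
    enough (3 * (C4 ^ 2 / r x ^ 3) <= / 3 / r x ^ 2) by lra.
    replace (3 * (C4 ^ 2 / r x ^ 3)) with (/ 3 / r x ^ 2 * (9 * C4 ^ 2 / r x)) by (field; lra).
    rewrite <- (Rmult_1_r (/ 3 / r x ^ 2)) at 2.
    apply Rmult_le_compat_l; [apply Rmult_le_pos; [lra | apply Rlt_le, Rinv_0_lt_compat; lra] |].
    apply (Rmult_le_reg_r (r x)); [lra |]. unfold Rdiv. rewrite Rmult_assoc, Rinv_l; lra.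
Qed.

(* Once [r >= 9 C4^2], the [(2/3 - u) r^-2] term of [dG] dominates and [G] increases. *)
Lemma G_eventually_pos : exists T m, t0 <= T /\ 0 < m /\ forall t, T <= t -> m <= G t.
Proof.
  destruct u_inv_sq_bound as [C4 [HC4 Hu]].
  destruct (coefficients_after t0 (Rle_refl t0)) as [Hr0 [_ [[Hrho0 _] _]]].
  set (T := t0 + 9 * C4 ^ 2 / rho0).
  assert (HT : t0 <= T).
  { assert (0 <= 9 * C4 ^ 2 / rho0) by (apply Rmult_le_pos; [nra | apply Rlt_le, Rinv_0_lt_compat; lra]).
    unfold T. lra. }
  assert (HrT : 9 * C4 ^ 2 <= r T).
  { pose proof (r_ge_linear T HT) as Hlin.
    replace (rho0 * (T - t0)) with (9 * C4 ^ 2) in Hlin by (unfold T; field; lra). lra. }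
  exists T, (G T). split; [exact HT | split].
  - destruct (in_region T HT) as [_ Hp]. destruct (coefficients_after T HT) as [H1 _].
    unfold G, u. apply Rmult_lt_0_compat; [apply pow_lt |]; lra.
  - intros t Ht. apply (le_of_derive_nonneg G dG); [exact Ht | intros x Hx; apply is_derive_G; lra |].
    intros x Hx. apply (dG_ge_inv_sq C4 x ltac:(lra) (Hu x ltac:(lra))).
    pose proof (r_le r r_gt1 is_derive_B T x ltac:(lra) ltac:(lra)). lra.
Qed.

Lemma G_limit : exists mu a, 0 < mu /\ 0 <= a /\ forall t, t0 <= t -> Rabs (G t - mu) <= a / r t.
Proof.
  destruct fm_inv_sq_bound as [C3 [HC3 Hfm]]. destruct u_inv_sq_bound as [C4 [HC4 Hu]].
  destruct (coefficients_after t0 (Rle_refl t0)) as [Hr0 [_ [[Hrho0 _] _]]].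
  set (K := (2/3 + C3 ^ 2 + 3 * C4 ^ 2) / rho0).
  assert (HK : 0 <= K) by (apply Rmult_le_pos; [nra | apply Rlt_le, Rinv_0_lt_compat; lra]).
  assert (Ha : 0 <= K / rho0) by (apply Rmult_le_pos; [lra | apply Rlt_le, Rinv_0_lt_compat; lra]).
  destruct (converges_at_inv_r_rate G dG K HK is_derive_G) as [mu Hmu].
  { intros x Hx. destruct (coefficients_after x Hx) as [H1 _].
    assert (0 < / r x ^ 2) by (apply Rinv_0_lt_compat, pow_lt; lra).
    pose proof (dG_le_inv_sq C3 x Hx (Hfm x Hx)). destruct (dG_ge_inv_sq C4 x Hx (Hu x Hx)) as [Hlow _].
    apply Rabs_le. unfold K, Rdiv in *. split; nra. }
  destruct G_eventually_pos as [T [m [HT [Hm HG]]]].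
  exists mu, (K / rho0). split; [| split; [exact Ha | exact Hmu]].
  enough (m <= mu) by lra. exact (limit_ge G mu (K / rho0) m T Ha Hmu HG).
Qed.

Lemma dH_eq x : t0 <= x -> dH x = (6 * r x * fm x * u x - 2 * fm x / r x ^ 2) / rho r x.
Proof.
  intro Hx. destruct (coefficients_after x Hx) as [H1 [_ [[H2 H3] [H4 H5]]]].
  unfold dH. rewrite H5. field. lra.
Qed.

Lemma dH_abs_le_inv_sq C3 C4 x : t0 <= x -> 0 <= C3 -> 0 <= C4 ->
  fm x <= C3 / r x ^ 2 -> u x <= C4 / r x ^ 2 -> Rabs (dH x) <= C3 * (6 * C4 + 2) / rho0 / r x ^ 2.
Proof.
  intros Hx HC3 HC4 Hfm Hu. destruct (coefficients_after x Hx) as [H1 [_ [[H2 H3] _]]].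
  destruct (in_region x Hx) as [Hm Hp].
  assert (Hr2 : 0 < r x ^ 2) by (apply pow_lt; lra).
  set (s := / r x). set (F := fm x * r x ^ 2). set (V := u x * r x ^ 2).
  assert (Hs : 0 < s <= 1)
    by (unfold s; split; [apply Rinv_0_lt_compat | rewrite <- Rinv_1; apply Rinv_le_contravar]; lra).
  assert (HF : 0 <= F <= C3).
  { unfold F. split; [nra |]. apply (Rmult_le_compat_r (r x ^ 2)) in Hfm; [| lra].
    replace (C3 / r x ^ 2 * r x ^ 2) with C3 in Hfm by (field; lra). exact Hfm. }
  assert (HV : 0 <= V <= C4).
  { unfold V, u. split; [nra |]. apply (Rmult_le_compat_r (r x ^ 2)) in Hu; [| lra].
    replace (C4 / r x ^ 2 * r x ^ 2) with C4 in Hu by (field; lra). exact Hu. }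
  replace (dH x) with ((6 * F * V * s ^ 3 - 2 * F * s ^ 4) / rho r x)
    by (rewrite dH_eq by exact Hx; unfold F, V, s; field; lra).
  replace (C3 * (6 * C4 + 2) / rho0 / r x ^ 2) with (C3 * (6 * C4 + 2) * s ^ 2 / rho0)
    by (unfold s; field; lra).
  assert (Hs3 : s ^ 3 <= s ^ 2) by (simpl; nra).
  assert (Hs4 : s ^ 4 <= s ^ 2) by (simpl; nra).
  assert (0 <= s ^ 3) by (apply pow_le; lra). assert (0 <= s ^ 4) by (apply pow_le; lra).
  assert (HFV : F * V <= C3 * C4) by (apply Rmult_le_compat; lra).
  assert (F * V * s ^ 3 <= C3 * C4 * s ^ 2) by (apply Rmult_le_compat; nra).
  assert (F * s ^ 4 <= C3 * s ^ 2) by (apply Rmult_le_compat; lra).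
  assert (0 <= F * V * s ^ 3) by (apply Rmult_le_pos; nra).
  assert (0 <= F * s ^ 4) by (apply Rmult_le_pos; lra).
  assert (Ha : 0 <= C3 * (6 * C4 + 2) * s ^ 2) by (apply Rmult_le_pos; [nra | apply pow2_ge_0]).
  apply Rabs_le. split.
  - apply Rle_trans with (- (C3 * (6 * C4 + 2) * s ^ 2) / rho0); [right; field; lra |].
    apply Rdiv_ge_compat_denom; [lra | exact Ha | nra].
  - apply Rdiv_le_compat_denom; [lra | exact Ha | nra].
Qed.

(* [H exp (- c / r)] is nondecreasing, since [dH >= - 2 fm / (r^2 rho)]. *)
Lemma H_bounded_below : exists m, 0 < m /\ forall t, t0 <= t -> m <= H t.
Proof.
  destruct (coefficients_after t0 (Rle_refl t0)) as [Hr0 [_ [[Hrho0 _] _]]].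
  set (c := 2 / rho0 ^ 2).
  assert (Hc : 0 < c) by (unfold c; apply Rdiv_lt_0_compat; nra).
  set (Phi := fun x => H x * exp (- (c / r x))).
  assert (Hinc : forall t, t0 <= t -> Phi t0 <= Phi t).
  { intros t Ht.
    apply (le_of_derive_nonneg Phi (fun x => exp (- (c / r x)) * (dH x + H x * c * rho r x / r x ^ 2)));
      [exact Ht | |].
    - intros x Hx. pose proof (is_derive_H x ltac:(lra)) as Dh.
      pose proof (is_derive_r_after x ltac:(lra)) as Dr.
      destruct (coefficients_after x ltac:(lra)) as [H1 _].
      unfold Phi. auto_derive; [ex_derive_from_hyps; lra |].
      rewrite_Derive Dh. rewrite_Derive Dr. unfold Rdiv. field. lra.
    - intros x Hx. destruct (coefficients_after x ltac:(lra)) as [H1 [_ [[_ H3] [H4 _]]]].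
      destruct (in_region x ltac:(lra)) as [Hm Hp].
      apply Rmult_le_pos; [apply Rlt_le, exp_pos |].
      assert (Hlow : - (2 * fm x) / rho r x <= dH x).
      { rewrite dH_eq by lra. unfold Rdiv. apply Rmult_le_compat_r; [apply Rlt_le, Rinv_0_lt_compat; lra |].
        assert (0 <= 6 * r x * fm x * u x) by (unfold u; repeat apply Rmult_le_pos; lra).
        assert (fm x * / r x ^ 2 <= fm x).
        { rewrite <- (Rmult_1_r (fm x)) at 2. apply Rmult_le_compat_l; [lra |].
          rewrite <- Rinv_1. apply Rinv_le_contravar; [lra | simpl; nra]. }
        lra. }
      assert (Hpos : 2 * fm x / rho r x <= H x * c * rho r x / r x ^ 2).
      { unfold H, c. replace (r x ^ 2 * fm x * (2 / rho0 ^ 2) * rho r x / r x ^ 2)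
          with (2 * fm x / rho r x * (rho r x ^ 2 / rho0 ^ 2)) by (field; lra).
        apply Rle_mult_ratio; [apply Rmult_le_pos; [lra | apply Rlt_le, Rinv_0_lt_compat; lra] |].
        split; [nra | apply pow_incr; lra]. }
      unfold Rdiv in *. lra. }
  exists (Phi t0). split.
  - destruct (in_region t0 (Rle_refl t0)) as [Hm _].
    apply Rmult_lt_0_compat; [apply Rmult_lt_0_compat; [apply pow_lt |] | apply exp_pos]; lra.
  - intros t Ht. eapply Rle_trans; [exact (Hinc t Ht) |].
    destruct (coefficients_after t Ht) as [H1 _]. destruct (in_region t Ht) as [Hm _].
    assert (Hexp : exp (- (c / r t)) <= 1).
    { rewrite <- exp_0. apply Rlt_le, exp_increasing.
      assert (0 < c / r t) by (apply Rdiv_lt_0_compat; lra). lra. }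
    assert (0 <= H t) by (unfold H; apply Rmult_le_pos; [apply pow2_ge_0 | lra]).
    unfold Phi. rewrite <- (Rmult_1_r (H t)) at 2. apply Rmult_le_compat_l; [lra | exact Hexp].
Qed.

Lemma H_limit : exists nu a, 0 < nu /\ 0 <= a /\ forall t, t0 <= t -> Rabs (H t - nu) <= a / r t.
Proof.
  destruct fm_inv_sq_bound as [C3 [HC3 Hfm]]. destruct u_inv_sq_bound as [C4 [HC4 Hu]].
  destruct (coefficients_after t0 (Rle_refl t0)) as [Hr0 [_ [[Hrho0 _] _]]].
  set (K := C3 * (6 * C4 + 2) / rho0).
  assert (HK : 0 <= K) by (apply Rmult_le_pos; [nra | apply Rlt_le, Rinv_0_lt_compat; lra]).
  assert (Ha : 0 <= K / rho0) by (apply Rmult_le_pos; [lra | apply Rlt_le, Rinv_0_lt_compat; lra]).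
  destruct (converges_at_inv_r_rate H dH K HK is_derive_H) as [nu Hnu].
  { intros x Hx. apply dH_abs_le_inv_sq; auto. }
  destruct H_bounded_below as [m [Hm HH]].
  exists nu, (K / rho0). split; [| split; [exact Ha | exact Hnu]].
  enough (m <= nu) by lra. exact (limit_ge H nu (K / rho0) m t0 Ha Hnu HH).
Qed.

Theorem asymptotic_expansion :
  filterlim fp (Rbar_locally p_infty) (locally (2/3)) /\
  filterlim fm (Rbar_locally p_infty) (locally 0) /\ has_asymptotics fp fm.
Proof.
  destruct G_limit as [mu [a [Hmu [Ha HG]]]].
  destruct H_limit as [nu [b [Hnu [Hb HH]]]].
  destruct r_minus_t_bounded as [D [HD HrD]].
  set (T := Rmax t0 (2 * D + 1)).
  assert (HT : t0 <= T /\ 2 * D + 1 <= T) by (split; [apply Rmax_l | apply Rmax_r]).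
  set (C := Rmax (8 * a + 6 * Rabs mu * D) (8 * b + 6 * Rabs nu * D)).
  assert (HC : 8 * a + 6 * Rabs mu * D <= C /\ 8 * b + 6 * Rabs nu * D <= C)
    by (split; [apply Rmax_l | apply Rmax_r]).
  assert (HC0 : 0 <= C) by (pose proof (Rabs_pos mu); nra).
  assert (Hexp : forall t, T <= t ->
    Rabs (fp t - 2/3 - mu / t ^ 2) <= C / t ^ 3 /\ Rabs (fm t - nu / t ^ 2) <= C / t ^ 3).
  { intros t Ht. specialize (HrD t ltac:(lra)).
    assert (t <= 2 * r t) by (apply Rabs_le_between in HrD; lra).
    assert (Hmono : forall c, c <= C -> c / t ^ 3 <= C / t ^ 3)
      by (intros; apply Rmult_le_compat_r; [apply Rlt_le, Rinv_0_lt_compat, pow_lt |]; lra).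
    split.
    - apply Rle_trans with ((8 * a + 6 * Rabs mu * D) / t ^ 3); [| apply Hmono, HC].
      apply (inv_sq_expansion_shift (u t) mu a D t (r t)); try lra. apply HG. lra.
    - apply Rle_trans with ((8 * b + 6 * Rabs nu * D) / t ^ 3); [| apply Hmono, HC].
      apply (inv_sq_expansion_shift (fm t) nu b D t (r t)); try lra. apply HH. lra. }
  split; [| split].
  - apply (filterlim_of_inv_sq_expansion fp (2/3) mu C T HC0). intros t Ht. apply Hexp, Ht.
  - apply (filterlim_of_inv_sq_expansion fm 0 nu C T HC0). intros t Ht.
    rewrite Rminus_0_r. apply Hexp, Ht.
  - exists mu, nu. split; [lra | split; [lra |]]. exists C, T. split; [lra | exact Hexp].
Qed.

End Asymptotics.

(** * Existence through a truncated system *)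

Definition clamp01 (x : R) : R := Rmax 0 (Rmin x 1).

Lemma clamp01_id x : 0 <= x <= 1 -> clamp01 x = x.
Proof. intro. unfold clamp01, Rmax, Rmin. repeat destruct Rle_dec; lra. Qed.

Lemma clamp01_range x : 0 <= clamp01 x <= 1.
Proof. unfold clamp01, Rmax, Rmin. repeat destruct Rle_dec; lra. Qed.

Lemma clamp01_lipschitz x y : Rabs (clamp01 x - clamp01 y) <= Rabs (x - y).
Proof.
  pose proof (Rle_abs (x - y)). pose proof (Rle_abs (- (x - y))). rewrite Rabs_Ropp in *.
  unfold clamp01, Rmax, Rmin. repeat destruct Rle_dec; apply Rabs_le; lra.
Qed.

Lemma continuous_clamp01 (f : R -> R) x : continuous f x -> continuous (fun y => clamp01 (f y)) x.
Proof.
  intro Hf. apply (continuous_Rmax_fun (fun _ => 0)); [apply continuous_const |].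
  apply (continuous_Rmin_fun f (fun _ => 1)); [exact Hf | apply continuous_const].
Qed.

(* Freezing time below [t0 / 2] keeps [1 / (r rho)] bounded (it blows up as [t -> 0]) and
   clamping the states to [0, 1] makes the system globally Lipschitz; for [t >= t0] nothing
   changes inside the trapping region. *)
Definition Fplus_trunc (r : R -> R) (t0 s x y : R) : R :=
  Fplus r (Rmax s (t0 / 2)) (clamp01 x) (clamp01 y).
Definition Fminus_trunc (r : R -> R) (t0 s x y : R) : R :=
  Fminus r (Rmax s (t0 / 2)) (clamp01 x) (clamp01 y).

Section Truncation.

Variable r : R -> R.
Hypothesis r_gt1 : forall t, 0 < t -> 1 < r t.
Hypothesis is_derive_B : forall t, 0 < t -> is_derive (B_of r) t (A_of r t / B_of r t).
Variable t0 : R.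
Hypothesis t0_pos : 0 < t0.

Let k (z : R) : R := / (r z * rho r z).
Let w (z : R) : R := rho r z ^ 2.

Lemma continuous_k z : 0 < z -> continuous k z.
Proof.
  intro Hz. pose proof (r_gt1 z Hz). pose proof (inv_r3_bounds r r_gt1 z Hz).
  pose proof (rho_bounds r r_gt1 z Hz). pose proof (is_derive_r r r_gt1 is_derive_B z Hz).
  apply (ex_derive_continuous (V := R_NormedModule)). unfold k, rho in *.
  simpl in *. unfold Rminus in *.
  auto_derive; ex_derive_from_hyps; try lra; apply Rgt_not_eq; [nra |].
  apply Rmult_lt_0_compat; lra.
Qed.

Lemma continuous_w z : 0 < z -> continuous w z.
Proof.
  intro Hz. pose proof (r_gt1 z Hz). pose proof (inv_r3_bounds r r_gt1 z Hz).
  pose proof (is_derive_r r r_gt1 is_derive_B z Hz).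
  apply (ex_derive_continuous (V := R_NormedModule)). unfold w, rho in *.
  simpl in *. unfold Rminus in *.
  auto_derive; ex_derive_from_hyps; try lra; apply Rgt_not_eq; nra.
Qed.

Lemma truncated_coefficients s :
  0 < k (Rmax s (t0 / 2)) <= k (t0 / 2) /\ 0 < w (Rmax s (t0 / 2)) < 1.
Proof.
  set (z := Rmax s (t0 / 2)). assert (Hz : t0 / 2 <= z) by apply Rmax_r.
  assert (Hh : 0 < t0 / 2) by lra.
  pose proof (r_gt1 z ltac:(lra)). pose proof (rho_bounds r r_gt1 z ltac:(lra)).
  pose proof (r_gt1 _ Hh). pose proof (rho_bounds r r_gt1 _ Hh).
  pose proof (r_le r r_gt1 is_derive_B _ _ Hh Hz). pose proof (rho_le r r_gt1 is_derive_B _ _ Hh Hz).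
  unfold k, w. split; [split |].
  - apply Rinv_0_lt_compat. nra.
  - apply Rinv_le_contravar; [nra | apply Rmult_le_compat; lra].
  - simpl. split; nra.
Qed.

Lemma Fplus_trunc_eq s x y : Fplus_trunc r t0 s x y =
  k (Rmax s (t0 / 2)) * (clamp01 x * (3 - w (Rmax s (t0 / 2)) - 3 * clamp01 x)
                         + clamp01 y * clamp01 y * w (Rmax s (t0 / 2))).
Proof. unfold Fplus_trunc, Fplus, k, w, Rdiv. ring. Qed.

Lemma Fminus_trunc_eq s x y : Fminus_trunc r t0 s x y =
  k (Rmax s (t0 / 2)) * (6 * clamp01 y * (clamp01 x - 1)).
Proof. unfold Fminus_trunc, Fminus, k, Rdiv. ring. Qed.

Let M : R := 6 * k (t0 / 2).

Lemma Fplus_trunc_bounded s x y : Rabs (Fplus_trunc r t0 s x y) <= M.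
Proof.
  rewrite Fplus_trunc_eq. destruct (truncated_coefficients s) as [[K1 K2] [W1 W2]].
  pose proof (clamp01_range x). pose proof (clamp01_range y).
  set (X := clamp01 x) in *. set (Y := clamp01 y) in *.
  rewrite Rabs_mult, (Rabs_right (k _)) by lra.
  assert (Rabs (X * (3 - w (Rmax s (t0 / 2)) - 3 * X) + Y * Y * w (Rmax s (t0 / 2))) <= 6)
    by (apply Rabs_le; split; nra).
  unfold M. rewrite (Rmult_comm 6 (k (t0 / 2))). apply Rmult_le_compat; [lra | apply Rabs_pos | lra | lra].
Qed.

Lemma Fminus_trunc_bounded s x y : Rabs (Fminus_trunc r t0 s x y) <= M.
Proof.
  rewrite Fminus_trunc_eq. destruct (truncated_coefficients s) as [[K1 K2] _].
  pose proof (clamp01_range x). pose proof (clamp01_range y).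
  rewrite Rabs_mult, (Rabs_right (k _)) by lra.
  assert (Rabs (6 * clamp01 y * (clamp01 x - 1)) <= 6) by (apply Rabs_le; split; nra).
  unfold M. rewrite (Rmult_comm 6 (k (t0 / 2))). apply Rmult_le_compat; [lra | apply Rabs_pos | lra | lra].
Qed.

Lemma Fplus_trunc_lipschitz s x y x' y' :
  Rabs (Fplus_trunc r t0 s x y - Fplus_trunc r t0 s x' y') <= M * (Rabs (x - x') + Rabs (y - y')).
Proof.
  rewrite !Fplus_trunc_eq. destruct (truncated_coefficients s) as [[K1 K2] [W1 W2]].
  pose proof (clamp01_range x). pose proof (clamp01_range y).
  pose proof (clamp01_range x'). pose proof (clamp01_range y').
  pose proof (clamp01_lipschitz x x'). pose proof (clamp01_lipschitz y y').
  set (z := Rmax s (t0 / 2)) in *.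
  set (X := clamp01 x) in *. set (Y := clamp01 y) in *.
  set (X' := clamp01 x') in *. set (Y' := clamp01 y') in *.
  replace (k z * (X * (3 - w z - 3 * X) + Y * Y * w z) - k z * (X' * (3 - w z - 3 * X') + Y' * Y' * w z))
    with (k z * ((3 - w z - 3 * (X + X')) * (X - X') + ((Y + Y') * w z) * (Y - Y'))) by ring.
  rewrite Rabs_mult, (Rabs_right (k z)) by lra.
  assert (Rabs ((3 - w z - 3 * (X + X')) * (X - X') + ((Y + Y') * w z) * (Y - Y'))
          <= 6 * (Rabs (x - x') + Rabs (y - y'))).
  { eapply Rle_trans; [apply Rabs_triang |].
    rewrite (Rabs_mult _ (X - X')), (Rabs_mult _ (Y - Y')).
    assert (Rabs (3 - w z - 3 * (X + X')) <= 6) by (apply Rabs_le; split; nra).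
    assert (Rabs ((Y + Y') * w z) <= 6) by (apply Rabs_le; split; nra).
    pose proof (Rabs_pos (X - X')). pose proof (Rabs_pos (Y - Y')). nra. }
  unfold M. rewrite (Rmult_comm 6 (k (t0 / 2))), (Rmult_assoc (k (t0 / 2)) 6).
  apply Rmult_le_compat; [lra | apply Rabs_pos | lra | lra].
Qed.

Lemma Fminus_trunc_lipschitz s x y x' y' :
  Rabs (Fminus_trunc r t0 s x y - Fminus_trunc r t0 s x' y') <= M * (Rabs (x - x') + Rabs (y - y')).
Proof.
  rewrite !Fminus_trunc_eq. destruct (truncated_coefficients s) as [[K1 K2] _].
  pose proof (clamp01_range x). pose proof (clamp01_range y).
  pose proof (clamp01_range x'). pose proof (clamp01_range y').
  pose proof (clamp01_lipschitz x x'). pose proof (clamp01_lipschitz y y').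
  set (z := Rmax s (t0 / 2)) in *.
  set (X := clamp01 x) in *. set (Y := clamp01 y) in *.
  set (X' := clamp01 x') in *. set (Y' := clamp01 y') in *.
  replace (k z * (6 * Y * (X - 1)) - k z * (6 * Y' * (X' - 1)))
    with (k z * ((6 * Y') * (X - X') + (6 * (X - 1)) * (Y - Y'))) by ring.
  rewrite Rabs_mult, (Rabs_right (k z)) by lra.
  assert (Rabs ((6 * Y') * (X - X') + (6 * (X - 1)) * (Y - Y')) <= 6 * (Rabs (x - x') + Rabs (y - y'))).
  { eapply Rle_trans; [apply Rabs_triang |].
    rewrite (Rabs_mult _ (X - X')), (Rabs_mult _ (Y - Y')).
    assert (Rabs (6 * Y') <= 6) by (apply Rabs_le; split; nra).
    assert (Rabs (6 * (X - 1)) <= 6) by (apply Rabs_le; split; nra).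
    pose proof (Rabs_pos (X - X')). pose proof (Rabs_pos (Y - Y')). nra. }
  unfold M. rewrite (Rmult_comm 6 (k (t0 / 2))), (Rmult_assoc (k (t0 / 2)) 6).
  apply Rmult_le_compat; [lra | apply Rabs_pos | lra | lra].
Qed.

Lemma continuous_frozen_coefficients s :
  continuous (fun s => k (Rmax s (t0 / 2))) s /\ continuous (fun s => w (Rmax s (t0 / 2))) s.
Proof.
  assert (Htau : continuous (fun s => Rmax s (t0 / 2)) s)
    by (apply (continuous_Rmax_fun (fun s => s)); [apply continuous_id | apply continuous_const]).
  assert (Hpos : 0 < Rmax s (t0 / 2)) by (pose proof (Rmax_r s (t0 / 2)); lra).
  split.
  - exact (continuous_comp _ k s Htau (continuous_k _ Hpos)).
  - exact (continuous_comp _ w s Htau (continuous_w _ Hpos)).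
Qed.

Lemma Fplus_trunc_continuous f g : (forall s, continuous f s) -> (forall s, continuous g s) ->
  forall s, continuous (fun s => Fplus_trunc r t0 s (f s) (g s)) s.
Proof.
  intros Hf Hg s. destruct (continuous_frozen_coefficients s) as [Hk Hw].
  assert (HX := continuous_clamp01 f s (Hf s)). assert (HY := continuous_clamp01 g s (Hg s)).
  apply (continuous_ext (fun s => k (Rmax s (t0 / 2)) * (clamp01 (f s) * (3 - w (Rmax s (t0 / 2))
    - 3 * clamp01 (f s)) + clamp01 (g s) * clamp01 (g s) * w (Rmax s (t0 / 2)))));
    [intro; symmetry; apply Fplus_trunc_eq |].
  apply continuous_Rmult_fun; [exact Hk |]. apply continuous_Rplus_fun.
  - apply continuous_Rmult_fun; [exact HX |].
    apply continuous_Rminus_fun; [apply continuous_Rminus_fun; [apply continuous_const | exact Hw] |].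
    apply continuous_Rmult_fun; [apply continuous_const | exact HX].
  - apply continuous_Rmult_fun; [apply continuous_Rmult_fun; exact HY | exact Hw].
Qed.

Lemma Fminus_trunc_continuous f g : (forall s, continuous f s) -> (forall s, continuous g s) ->
  forall s, continuous (fun s => Fminus_trunc r t0 s (f s) (g s)) s.
Proof.
  intros Hf Hg s. destruct (continuous_frozen_coefficients s) as [Hk _].
  assert (HX := continuous_clamp01 f s (Hf s)). assert (HY := continuous_clamp01 g s (Hg s)).
  apply (continuous_ext (fun s => k (Rmax s (t0 / 2)) * (6 * clamp01 (g s) * (clamp01 (f s) - 1))));
    [intro; symmetry; apply Fminus_trunc_eq |].
  apply continuous_Rmult_fun; [exact Hk |]. apply continuous_Rmult_fun.
  - apply continuous_Rmult_fun; [apply continuous_const | exact HY].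
  - apply continuous_Rminus_fun; [exact HX | apply continuous_const].
Qed.

Theorem truncated_solution p q : exists f g : R -> R, f t0 = p /\ g t0 = q /\
  forall t, is_derive f t (Fplus_trunc r t0 t (f t) (g t)) /\
            is_derive g t (Fminus_trunc r t0 t (f t) (g t)).
Proof.
  assert (HM : 0 < M) by (destruct (truncated_coefficients 0) as [[K1 K2] _]; unfold M; lra).
  apply (picard_global_solution _ _ t0 p q M M HM Fplus_trunc_bounded Fminus_trunc_bounded
    Fplus_trunc_lipschitz Fminus_trunc_lipschitz Fplus_trunc_continuous Fminus_trunc_continuous).
Qed.

End Truncation.

Lemma truncation_agrees r t0 t x y : t0 / 2 <= t -> 0 <= x <= 1 -> 0 <= y <= 1 ->
  Fplus_trunc r t0 t x y = Fplus r t x y /\ Fminus_trunc r t0 t x y = Fminus r t x y.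
Proof.
  intros Ht Hx Hy. unfold Fplus_trunc, Fminus_trunc.
  rewrite Rmax_left, !clamp01_id by lra. split; reflexivity.
Qed.

Theorem mainTheorem5 :
  forall r : R -> R,
    (forall t, 0 < t -> 1 < r t) ->
    filterlim r (at_right 0) (locally 1) ->
    (forall t, 0 < t ->
       is_derive (A_of r) t (/ 2 * (1 - A_of r t ^ 2 / B_of r t ^ 2))) ->
    (forall t, 0 < t -> is_derive (B_of r) t (A_of r t / B_of r t)) ->
  forall t0 p q : R,
    0 < t0 -> 2/3 < p < 1 -> 0 < q < 1 ->
    (exists fp fm : R -> R,
        fp t0 = p /\ fm t0 = q /\ forall t, t0 <= t -> solves_at r fp fm t) /\
    (forall fp fm : R -> R,
        fp t0 = p -> fm t0 = q -> (forall t, t0 <= t -> solves_at r fp fm t) ->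
        filterlim fp (Rbar_locally p_infty) (locally (2/3)) /\
        filterlim fm (Rbar_locally p_infty) (locally 0) /\
        has_asymptotics fp fm).
Proof.
  (* Only [B' = A / B], i.e. [r' = rho], is needed: the equation for [A] and [r -> 1] are not. *)
  intros r Hr1 _ _ HB t0 p q Ht0 Hp Hq.
  split.
  - destruct (truncated_solution r Hr1 HB t0 Ht0 p q) as [f [g [Hf0 [Hg0 Hd]]]].
    assert (Hbox : forall t, t0 <= t -> 0 < g t < 1 -> 2/3 < f t < 1 ->
      is_derive f t (Fplus r t (f t) (g t)) /\ is_derive g t (Fminus r t (f t) (g t))).
    { intros t Ht Hg Hf. destruct (truncation_agrees r t0 t (f t) (g t)) as [E1 E2]; try lra.
      rewrite <- E1, <- E2. apply Hd. }
    destruct (trapping_region r Hr1 HB f g t0 p q Ht0 (proj1 Hq) Hf0 Hg0) as [P [HP Hinv]];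
      [| exact Hbox | exact Hp | exact (proj2 Hq) |].
    { intros t _. split; [exact (is_derive_continuous _ _ _ (proj1 (Hd t)))
                         | exact (is_derive_continuous _ _ _ (proj2 (Hd t)))]. }
    exists f, g. split; [exact Hf0 | split; [exact Hg0 |]].
    intros t Ht. destruct (Hinv t Ht) as [Hg Hf].
    apply solves_at_iff; [exact Hr1 | lra | apply Hbox; lra].
  - intros fp fm Hfp0 Hfm0 Hsol.
    assert (Hder : forall t, t0 <= t ->
      is_derive fp t (Fplus r t (fp t) (fm t)) /\ is_derive fm t (Fminus r t (fp t) (fm t)))
      by (intros t Ht; apply solves_at_iff; [exact Hr1 | lra | now apply Hsol]).
    destruct (trapping_region r Hr1 HB fp fm t0 p q Ht0 (proj1 Hq) Hfp0 Hfm0) as [P [HP Hinv]];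
      [| intros t Ht _ _; now apply Hder | exact Hp | exact (proj2 Hq) |].
    { intros t Ht. split; [exact (is_derive_continuous _ _ _ (proj1 (Hder t Ht)))
                          | exact (is_derive_continuous _ _ _ (proj2 (Hder t Ht)))]. }
    apply (asymptotic_expansion r fp fm t0 P Hr1 HB Ht0 HP); [| exact Hder].
    intros t Ht. destruct (Hinv t Ht) as [[Hm _] Hf]. split; [exact Hm | exact Hf].
Qed.
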